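(* Under the assumptions (A1), (A2), (A3) below, with the notation of the context: (1) for every $\varphi\in C([-q,0],\mathbb R)$ and every $t>0$, $|x(\varphi)(t)-z_h(\varphi)([t]_h)|\to0$ as $h\to0$ (along $h=q/k$, $k\to\infty$); (2) for all sufficiently small $h=q/k$, the zero solution of the difference equation with variable delay $$\zeta_h(n+1)=\zeta_h(n)-\Big(\int_{nh}^{(n+1)h}a(s)\,ds\Big)\zeta_h(n-k_n),\quad n\ge0,\qquad \zeta_h(n)=\varphi(nh),\ n=-k,\dots,0,$$ is uniformly asymptotically stable. Assumptions: $q>0$, $a:[0,\infty)\to[0,\infty)$ continuous, $r:[0,\infty)\to[0,q]$ with $q=\sup_{t\ge0}r(t)$; (A1) the zero solution of $x'(t)=-a(t)x(t-r(t))$ is uniformly asymptotically stable; (A2) $\sup_{t\ge0}|a(t)|<\infty$; (A3) $r$ is uniformly continuous on $[0,\infty)$.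
   Context: $x(\varphi)$ is the solution of $x'(t)=-a(t)x(t-r(t))$, $t\ge0$, with $x=\varphi$ on $[-q,0]$. For $h=q/k$ ($k\ge1$ integer), $[s]_h=\lfloor s/h\rfloor h$, $k_n:=\lfloor r(nh)/h\rfloor\in\{0,\dots,k\}$, and $z_h(\varphi)$ is the continuous function on $[0,\infty)$ (with $z_h(nh)=\varphi(nh)$ for $n=-k,\dots,0$) satisfying $z_h'(t)=-a(t)z_h((i-k_i)h)$ on each $[ih,(i+1)h)$, $i\ge0$; the sequence $\zeta_h(n)=z_h(nh)$ is the solution of the displayed difference equation. The zero solution of the difference equation is uniformly asymptotically stable if it is uniformly stable (for every $\varepsilon>0$ there is $\delta>0$ such that initial data of sup-norm $<\delta$ at any initial time give solutions bounded by $\varepsilon$ afterwards) and uniformly attractive (solutions with small initial data tend to $0$ as $n\to\infty$ uniformly with respect to the initial time). *)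

From Stdlib Require Import Reals Lra ZArith ClassicalEpsilon.
Open Scope R_scope.

Definition cont_on (I : R -> Prop) (f : R -> R) : Prop :=
  forall t, I t -> forall eps, 0 < eps ->
    exists del, 0 < del /\ forall s, I s -> Rabs (s - t) < del ->
      Rabs (f s - f t) < eps.

(* Riemann integral of f over [u,v] (0 if f is not Riemann integrable there;
   the value does not depend on the integrability proof, by RiemannInt_P5). *)
Definition Rint (f : R -> R) (u v : R) : R :=
  match excluded_middle_informative
          (exists _ : Riemann_integrable f u v, True) with
  | left H => RiemannInt (proj1_sig (constructive_indefinite_description _ H))
  | right _ => 0
  end.

Definition dde_sol (a r : R -> R) (q sigma : R) (x : R -> R) : Prop :=
  cont_on (fun t => sigma - q <= t) x /\
  forall t, sigma < t -> derivable_pt_lim x t (- a t * x (t - r t)).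

Definition dde_UAS (a r : R -> R) (q : R) : Prop :=
  (forall eps, 0 < eps -> exists del, 0 < del /\
     forall sigma x, 0 <= sigma -> dde_sol a r q sigma x ->
       (forall s, sigma - q <= s <= sigma -> Rabs (x s) < del) ->
       forall t, sigma <= t -> Rabs (x t) < eps) /\
  (exists del0, 0 < del0 /\ forall eta, 0 < eta -> exists T, 0 <= T /\
     forall sigma x, 0 <= sigma -> dde_sol a r q sigma x ->
       (forall s, sigma - q <= s <= sigma -> Rabs (x s) < del0) ->
       forall t, sigma + T <= t -> Rabs (x t) < eta).

(* [s]_h / h = floor(s/h) ; Int_part is the floor function. *)
Definition kn (r : R -> R) (h : R) (n : Z) : Z := Int_part (r (IZR n * h) / h).

Definition coef (a : R -> R) (h : R) (n : Z) : R :=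
  Rint a (IZR n * h) ((IZR n + 1) * h).

Definition diff_sol (a r : R -> R) (h : R) (n0 : Z) (zeta : Z -> R) : Prop :=
  forall n : Z, (n0 <= n)%Z ->
    zeta (n + 1)%Z = zeta n - coef a h n * zeta (n - kn r h n)%Z.

Definition diff_UAS (a r : R -> R) (q : R) (k : nat) : Prop :=
  let h := q / INR k in
  let K := Z.of_nat k in
  (forall eps, 0 < eps -> exists del, 0 < del /\
     forall n0 zeta, (0 <= n0)%Z -> diff_sol a r h n0 zeta ->
       (forall m, (n0 - K <= m <= n0)%Z -> Rabs (zeta m) < del) ->
       forall n, (n0 <= n)%Z -> Rabs (zeta n) < eps) /\
  (exists del0, 0 < del0 /\ forall eta, 0 < eta -> exists N : Z, (0 <= N)%Z /\
     forall n0 zeta, (0 <= n0)%Z -> diff_sol a r h n0 zeta ->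
       (forall m, (n0 - K <= m <= n0)%Z -> Rabs (zeta m) < del0) ->
       forall n, (n0 + N <= n)%Z -> Rabs (zeta n) < eta).

From Stdlib Require Import Reals ZArith Lra Lia ClassicalEpsilon.
From Coquelicot Require Import Coquelicot.
Open Scope R_scope.

(* Both parts rest on comparing the scheme with the delay equation. On a cell
   [nh, (n+1)h] a solution y of the delay equation satisfies the recursion of
   the scheme, y((n+1)h) = y(nh) - (int a) y((n - k_n)h), up to a defect M w h,
   where w bounds the oscillation of y over distances h + |r(s) - r(nh)|; a
   discrete Gronwall inequality propagates these defects with a factor
   (1 + M h)^n <= exp (M n h).

   (1) Applied to x itself, uniform continuity of x on [-q, t] and of r makes w
   small as h -> 0.

   (2) Let a solution of the scheme have its initial window bounded by B. The
   linear interpolant of k + 1 of its values is a continuous initial function;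
   the solution y it generates (constructed by Picard iteration) is bounded by
   a fixed multiple of B and, by (A1), falls below B/4 after a time T
   independent of h. Since y has a controlled modulus of continuity, the
   comparison keeps the scheme within B/4 of y for a time T + 2q. So every block
   of 2k + ceil(T/h) steps halves the bound on the window while enlarging the
   solution by at most a fixed factor, and iterating blocks gives uniform
   stability and uniform attractivity. *)

Lemma le_of_derivable_pt_lim_nonneg (H dH : R -> R) (u v : R) :
  u <= v ->
  (forall c, u < c < v -> derivable_pt_lim H c (dH c) /\ 0 <= dH c) ->
  (forall c, u <= c <= v -> continuity_pt H c) ->
  H u <= H v.
Proof.
  intros huv Hd Hc.
  destruct (Req_dec u v) as [<-|ne]; [lra|].
  assert (pr1 : forall c, u < c < v -> derivable_pt H c)
    by (intros c hc; exists (dH c); exact (proj1 (Hd c hc))).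
  assert (pr2 : forall c, u < c < v -> derivable_pt id c)
    by (intros c _; apply derivable_pt_id).
  destruct (MVT H id u v pr1 pr2) as [c [P E]];
    [lra | exact Hc | intros; apply derivable_continuous_pt, derivable_pt_id |].
  rewrite (derive_pt_eq_0 H c (dH c) (pr1 c P) (proj1 (Hd c P))),
    (derive_pt_eq_0 id c 1 (pr2 c P) (derivable_pt_lim_id c)) in E.
  unfold id in E.
  assert (0 <= (v - u) * dH c) by (apply Rmult_le_pos; [lra | apply (Hd c P)]).
  nra.
Qed.

Lemma increment_le_of_derive_dominated (F G dF dG : R -> R) (u v : R) :
  u <= v ->
  (forall c, u < c < v -> derivable_pt_lim F c (dF c) /\
     derivable_pt_lim G c (dG c) /\ Rabs (dF c) <= dG c) ->
  (forall c, u <= c <= v -> continuity_pt F c /\ continuity_pt G c) ->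
  Rabs (F v - F u) <= G v - G u.
Proof.
  intros huv Hd Hc.
  assert (Hminus : G u - F u <= G v - F v).
  { apply (le_of_derivable_pt_lim_nonneg (fun t => G t - F t) (fun t => dG t - dF t)); auto.
    - intros c hc; destruct (Hd c hc) as [dFc [dGc hdc]]; split.
      + apply derivable_pt_lim_minus; auto.
      + pose proof (Rle_abs (dF c)); lra.
    - intros c hc; destruct (Hc c hc); apply continuity_pt_minus; auto. }
  assert (Hplus : G u + F u <= G v + F v).
  { apply (le_of_derivable_pt_lim_nonneg (fun t => G t + F t) (fun t => dG t + dF t)); auto.
    - intros c hc; destruct (Hd c hc) as [dFc [dGc hdc]]; split.
      + apply derivable_pt_lim_plus; auto.
      + pose proof (Rle_abs (- dF c)); rewrite Rabs_Ropp in *; lra.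
    - intros c hc; destruct (Hc c hc); apply continuity_pt_plus; auto. }
  apply Rabs_le; lra.
Qed.

Lemma increment_le_of_derive_bounded (F dF : R -> R) (C u v : R) :
  u <= v ->
  (forall c, u < c < v -> derivable_pt_lim F c (dF c) /\ Rabs (dF c) <= C) ->
  (forall c, u <= c <= v -> continuity_pt F c) ->
  Rabs (F v - F u) <= C * (v - u).
Proof.
  intros huv Hd Hc.
  replace (C * (v - u)) with (C * v - C * u) by ring.
  apply (increment_le_of_derive_dominated F (fun t => C * t) dF (fun _ => C)); auto.
  - intros c hc; destruct (Hd c hc); repeat split; auto.
    apply (derivable_pt_lim_ext (mult_real_fct C id));
      [intros; reflexivity|].
    rewrite <- (Rmult_1_r C) at 2. apply derivable_pt_lim_scal, derivable_pt_lim_id.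
  - intros c hc; split; auto. apply continuity_pt_mult;
      [apply continuity_pt_const; intros ? ?; reflexivity | apply continuity_pt_id].
Qed.

Lemma continuity_pt_of_eps (f : R -> R) (x : R) :
  (forall eps, 0 < eps -> exists del, 0 < del /\
     forall y, Rabs (y - x) < del -> Rabs (f y - f x) < eps) ->
  continuity_pt f x.
Proof.
  intros H eps heps. destruct (H eps heps) as [d [hd Hd]].
  exists d; split; auto. intros y [_ hy]. exact (Hd y hy).
Qed.

Lemma continuity_pt_eps (f : R -> R) (x : R) : continuity_pt f x ->
  forall eps, 0 < eps -> exists del, 0 < del /\
    forall y, Rabs (y - x) < del -> Rabs (f y - f x) < eps.
Proof.
  intros H eps heps. destruct (H eps heps) as [d [hd Hd]].
  exists d; split; auto. intros y hy.
  destruct (Req_dec y x) as [->|ne]; [rewrite Rminus_diag, Rabs_R0; auto|].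
  apply (Hd y); split; [split; [exact I | congruence] | exact hy].
Qed.

Lemma Rmax_lipschitz (c x y : R) : Rabs (Rmax c y - Rmax c x) <= Rabs (y - x).
Proof.
  unfold Rmax; destruct (Rle_dec c y), (Rle_dec c x);
    pose proof (Rle_abs (y - x)); pose proof (Rle_abs (- (y - x)));
    rewrite Rabs_Ropp in *; apply Rabs_le; lra.
Qed.

Lemma Rmin_lipschitz (c x y : R) : Rabs (Rmin c y - Rmin c x) <= Rabs (y - x).
Proof.
  unfold Rmin; destruct (Rle_dec c y), (Rle_dec c x);
    pose proof (Rle_abs (y - x)); pose proof (Rle_abs (- (y - x)));
    rewrite Rabs_Ropp in *; apply Rabs_le; lra.
Qed.

Lemma continuity_pt_Rmax (c t : R) : continuity_pt (Rmax c) t.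
Proof.
  apply continuity_pt_of_eps. intros eps he. exists eps; split; auto.
  intros y hy. eapply Rle_lt_trans; [apply Rmax_lipschitz | exact hy].
Qed.

Lemma continuity_pt_Rmax_comp (c : R) (f : R -> R) : cont_on (fun t => c <= t) f ->
  forall t, continuity_pt (fun s => f (Rmax c s)) t.
Proof.
  intros Hf t. apply continuity_pt_of_eps. intros eps heps.
  destruct (Hf (Rmax c t) (Rmax_l c t) eps heps) as [d [hd Hd]].
  exists d; split; auto. intros y hy. apply Hd; [apply Rmax_l|].
  eapply Rle_lt_trans; [apply Rmax_lipschitz | exact hy].
Qed.

Lemma continuity_pt_clamp_comp (c d : R) (f : R -> R) :
  cont_on (fun t => c <= t <= d) f -> c <= d ->
  forall t, continuity_pt (fun s => f (Rmin d (Rmax c s))) t.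
Proof.
  intros Hf cd t. apply continuity_pt_of_eps. intros eps heps.
  assert (HI : forall s, c <= Rmin d (Rmax c s) <= d).
  { intros s; unfold Rmin, Rmax; destruct (Rle_dec c s), (Rle_dec d _); lra. }
  destruct (Hf _ (HI t) eps heps) as [e [he He]].
  exists e; split; auto. intros y hy. apply He; [apply HI|].
  eapply Rle_lt_trans; [apply Rmin_lipschitz|].
  eapply Rle_lt_trans; [apply Rmax_lipschitz | exact hy].
Qed.

Lemma cont_on_continuity_pt (c : R) (f : R -> R) : cont_on (fun t => c <= t) f ->
  forall t, c < t -> continuity_pt f t.
Proof.
  intros Hf t ht. apply continuity_pt_of_eps. intros eps heps.
  destruct (Hf t (Rlt_le _ _ ht) eps heps) as [d [hd Hd]].
  exists (Rmin d (t - c)); split; [apply Rmin_pos; lra|].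
  intros y hy. pose proof (Rmin_l d (t - c)); pose proof (Rmin_r d (t - c)).
  apply Rabs_lt_between in hy as hy'. apply Hd; lra.
Qed.

Lemma cont_on_unif_interval (f : R -> R) (c d : R) : cont_on (fun t => c <= t) f ->
  forall eps, 0 < eps -> exists del, 0 < del /\ forall u v, c <= u <= d -> c <= v <= d ->
    Rabs (u - v) < del -> Rabs (f u - f v) < eps.
Proof.
  intros Hf eps heps.
  destruct (Heine (fun s => f (Rmax c s)) (fun s => c <= s <= d) (compact_P3 c d)
     (fun s _ => continuity_pt_Rmax_comp c f Hf s) (mkposreal eps heps)) as [[del hdel] Hd].
  exists del; split; auto. intros u v hu hv huv.
  specialize (Hd u v hu hv huv). simpl in Hd. rewrite !Rmax_right in Hd by lra. exact Hd.
Qed.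

Lemma derivable_pt_lim_RInt (f : R -> R) (c t : R) : (forall s, continuity_pt f s) ->
  derivable_pt_lim (fun x => RInt f c x) t (f t).
Proof.
  intros Hf. apply is_derive_Reals, is_derive_RInt with (a := c).
  - apply filter_forall. intros b.
    apply (RInt_correct (V := R_CompleteNormedModule)),
      (ex_RInt_continuous (V := R_CompleteNormedModule)).
    intros z _. apply continuity_pt_filterlim, Hf.
  - apply continuity_pt_filterlim, Hf.
Qed.

Lemma continuity_pt_RInt (f : R -> R) (c t : R) : (forall s, continuity_pt f s) ->
  continuity_pt (fun x => RInt f c x) t.
Proof. intros H. apply derivable_continuous_pt. exists (f t). apply derivable_pt_lim_RInt, H. Qed.

Lemma ex_RInt_of_continuity (f : R -> R) (u v : R) : (forall t, continuity_pt f t) ->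
  ex_RInt f u v.
Proof.
  intros H. apply (ex_RInt_continuous (V := R_CompleteNormedModule)).
  intros z _. apply continuity_pt_filterlim, H.
Qed.

Lemma Rint_eq_RInt (f g : R -> R) (u v : R) : u <= v ->
  (forall t, u <= t <= v -> f t = g t) -> (forall t, continuity_pt g t) ->
  Rint f u v = RInt g u v.
Proof.
  intros huv Hfg Hg. unfold Rint.
  destruct excluded_middle_informative as [e|ne].
  - destruct (constructive_indefinite_description _ e) as [pr Hpr]; simpl.
    rewrite <- RInt_Reals. apply RInt_ext. intros x hx.
    rewrite Rmin_left, Rmax_right in hx by lra. apply Hfg; lra.
  - exfalso. apply ne. refine (ex_intro _ _ I).
    apply Riemann_integrable_ext with g.
    + intros x hx. rewrite Rmin_left, Rmax_right in hx by lra. symmetry; apply Hfg; lra.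
    + apply ex_RInt_Reals_0, ex_RInt_of_continuity, Hg.
Qed.

Lemma exp_le_exp (x y : R) : x <= y -> exp x <= exp y.
Proof. intros [h|h]; [left; apply exp_increasing, h | rewrite h; lra]. Qed.

Lemma pow_1plus_le_exp (x : R) (n : nat) : 0 <= x -> (1 + x) ^ n <= exp (INR n * x).
Proof.
  intros hx. induction n as [|n IH].
  - simpl. rewrite Rmult_0_l, exp_0. lra.
  - rewrite S_INR. replace ((INR n + 1) * x) with (x + INR n * x) by ring.
    rewrite exp_plus. simpl.
    apply Rmult_le_compat; [lra | apply pow_le; lra | apply exp_ineq1_le | exact IH].
Qed.

Lemma INR_lt_pow2 (n : nat) : INR n < 2 ^ n.
Proof.
  induction n as [|n IH]; [simpl; lra|]. rewrite S_INR. simpl.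
  assert (1 <= 2 ^ n) by (apply pow_R1_Rle; lra). lra.
Qed.

Definition cell_index (h s : R) : Z := Int_part (s / h).

Lemma cell_index_bounds (h s : R) : 0 < h ->
  IZR (cell_index h s) * h <= s < IZR (cell_index h s) * h + h.
Proof.
  intros hh. unfold cell_index. destruct (base_Int_part (s / h)) as [b1 b2].
  assert (s / h * h = s) by (field; lra). split; nra.
Qed.

Lemma cell_index_range (h s : R) (lo hi : Z) : 0 < h ->
  IZR lo * h <= s -> s <= IZR hi * h -> (lo <= cell_index h s <= hi)%Z.
Proof.
  intros hh h1 h2. destruct (cell_index_bounds h s hh) as [c1 c2]. split.
  - assert (IZR lo < IZR (cell_index h s + 1)) by (rewrite plus_IZR; nra).
    apply lt_IZR in H. lia.
  - apply le_IZR. nra.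
Qed.

Lemma cell_index_grid (h : R) (m : Z) : 0 < h -> cell_index h (IZR m * h) = m.
Proof.
  intros hh. unfold cell_index. symmetry. apply Int_part_spec.
  replace (IZR m * h / h) with (IZR m) by (field; lra). lra.
Qed.

Lemma step_pos (q : R) (k : nat) : 0 < q -> (1 <= k)%nat ->
  0 < q / INR k /\ q = INR k * (q / INR k).
Proof.
  intros hq hk. assert (0 < INR k) by (apply lt_0_INR; lia).
  split; [apply Rdiv_lt_0_compat; auto | field; lra].
Qed.

Lemma exists_small_step (q e : R) : 0 < q -> 0 < e ->
  exists K : nat, forall k : nat, (K <= k)%nat -> (1 <= k)%nat -> q / INR k < e.
Proof.
  intros hq he. destruct (archimed_cor1 (e / q)) as [N [hN hN0]];
    [apply Rdiv_lt_0_compat; auto|].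
  exists N. intros k hk _.
  assert (0 < INR N) by (apply lt_0_INR; lia).
  assert (INR N <= INR k) by (apply le_INR; lia).
  assert (/ INR k <= / INR N) by (apply Rinv_le_contravar; lra).
  unfold Rdiv. apply Rmult_lt_reg_r with (/ q); [apply Rinv_0_lt_compat; lra|].
  rewrite Rmult_comm, <- Rmult_assoc, Rinv_l, Rmult_1_l by lra.
  unfold Rdiv in hN. lra.
Qed.

Lemma kn_bounds (r : R -> R) (q h : R) (k : nat) (n : Z) : 0 < h -> q = INR k * h ->
  0 <= r (IZR n * h) <= q ->
  (0 <= kn r h n <= Z.of_nat k)%Z /\
  IZR (kn r h n) * h <= r (IZR n * h) < IZR (kn r h n) * h + h.
Proof.
  intros hh hq hr.
  pose proof (cell_index_bounds h (r (IZR n * h)) hh) as [c1 c2].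
  assert (Hq : q = IZR (Z.of_nat k) * h) by (rewrite <- INR_IZR_INZ; exact hq).
  split; [|exact (conj c1 c2)].
  apply (cell_index_range h (r (IZR n * h)) 0 (Z.of_nat k) hh); lra.
Qed.

Lemma delay_grid_gap (r : R -> R) (h e s : R) (n : Z) :
  IZR (kn r h n) * h <= r (IZR n * h) < IZR (kn r h n) * h + h ->
  IZR n * h < s < (IZR n + 1) * h -> Rabs (r s - r (IZR n * h)) < e ->
  Rabs (IZR (n - kn r h n) * h - (s - r s)) < h + e.
Proof.
  intros hk hs hr. apply Rabs_lt_between in hr.
  rewrite minus_IZR. apply Rabs_lt_between. nra.
Qed.

Lemma grid_window (h : R) (k : nat) (n m : Z) : 0 < h -> (n - Z.of_nat k <= m <= n)%Z ->
  IZR n * h - INR k * h <= IZR m * h <= IZR n * h.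
Proof.
  intros hh hm. rewrite INR_IZR_INZ.
  assert (IZR n - IZR (Z.of_nat k) <= IZR m <= IZR n)
    by (rewrite <- minus_IZR; split; apply IZR_le; lia).
  split; nra.
Qed.

(** * Comparison of the scheme with the delay equation *)

Section Discretization.

Variables (a r : R -> R) (q M h : R) (k : nat).
Hypotheses (hq : 0 < q) (hh : 0 < h) (hqk : q = INR k * h)
  (ha_cont : cont_on (fun t => 0 <= t) a)
  (hM : forall t, 0 <= t -> Rabs (a t) <= M)
  (hr_range : forall t, 0 <= t -> 0 <= r t <= q).

Let ae := fun s => a (Rmax 0 s).

Let ae_cont : forall t, continuity_pt ae t.
Proof. exact (continuity_pt_Rmax_comp 0 a ha_cont). Qed.

Lemma bound_nonneg : 0 <= M.
Proof. pose proof (hM 0 (Rle_refl 0)); pose proof (Rabs_pos (a 0)); lra. Qed.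

Lemma coef_eq_RInt (n : Z) : 0 <= IZR n * h ->
  coef a h n = RInt ae (IZR n * h) ((IZR n + 1) * h).
Proof.
  intros hn. apply Rint_eq_RInt; [nra | | exact ae_cont].
  intros t ht. unfold ae. rewrite Rmax_right by lra. reflexivity.
Qed.

Lemma coef_bound (n : Z) : 0 <= IZR n * h -> Rabs (coef a h n) <= M * h.
Proof.
  intros hn. rewrite coef_eq_RInt by exact hn.
  replace (M * h) with (((IZR n + 1) * h - IZR n * h) * M) by ring.
  apply abs_RInt_le_const; [nra | apply ex_RInt_of_continuity, ae_cont|].
  intros t ht. unfold ae. rewrite Rmax_right by lra. apply hM; lra.
Qed.

Lemma coef_bound_int (n : Z) : (0 <= n)%Z -> Rabs (coef a h n) <= M * h.
Proof.
  intros hn. apply coef_bound.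
  assert (0 <= IZR n) by (apply IZR_le; lia). nra.
Qed.

Lemma kn_bounds_int (n : Z) : (0 <= n)%Z ->
  (0 <= kn r h n <= Z.of_nat k)%Z /\
  IZR (kn r h n) * h <= r (IZR n * h) < IZR (kn r h n) * h + h.
Proof.
  intros hn. apply (kn_bounds r q h k n hh hqk), hr_range.
  assert (0 <= IZR n) by (apply IZR_le; lia). nra.
Qed.

(* On the cell, [y t + c * int_{nh}^t a] has derivative [a t (c - y (t - r t))]. *)
Lemma dde_step_defect (y : R -> R) (w c : R) (n : Z) : 0 <= IZR n * h ->
  (forall t, IZR n * h <= t <= (IZR n + 1) * h -> continuity_pt y t) ->
  (forall t, IZR n * h < t < (IZR n + 1) * h ->
     derivable_pt_lim y t (- a t * y (t - r t))) ->
  (forall s, IZR n * h < s < (IZR n + 1) * h -> Rabs (c - y (s - r s)) <= w) ->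
  Rabs (y ((IZR n + 1) * h) - y (IZR n * h) + coef a h n * c) <= M * w * h.
Proof.
  intros hn Hyc Hyd Hdelay.
  set (u := IZR n * h) in *. set (v := (IZR n + 1) * h) in *.
  assert (huv : u <= v) by (unfold u, v; nra).
  rewrite coef_eq_RInt by exact hn. fold u v.
  replace (M * w * h) with (M * w * (v - u)) by (unfold u, v; ring).
  replace (y v - y u + RInt ae u v * c)
    with ((y v + RInt ae u v * c) - (y u + RInt ae u u * c))
    by (rewrite RInt_point; unfold zero; simpl; ring).
  apply (increment_le_of_derive_bounded (fun t => y t + RInt ae u t * c)
           (fun t => - a t * y (t - r t) + ae t * c)); [exact huv | |].
  - intros t ht. split.
    + apply derivable_pt_lim_plus; [apply Hyd, ht|].
      apply (derivable_pt_lim_scal_right (fun x => RInt ae u x)), derivable_pt_lim_RInt, ae_cont.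
    + unfold ae. rewrite Rmax_right by (unfold u in *; lra).
      replace (- a t * y (t - r t) + a t * c) with (a t * (c - y (t - r t))) by ring.
      rewrite Rabs_mult. apply Rmult_le_compat; try apply Rabs_pos.
      * apply hM; unfold u in *; lra.
      * apply Hdelay, ht.
  - intros t ht. apply continuity_pt_plus; [apply Hyc, ht|].
    apply continuity_pt_mult; [apply continuity_pt_RInt, ae_cont|].
    apply continuity_pt_const; intros ? ?; reflexivity.
Qed.

Lemma grid_error_step (y : R -> R) (zeta : Z -> R) (n : Z) (w E : R) :
  0 <= IZR n * h ->
  (forall t, IZR n * h <= t <= (IZR n + 1) * h -> continuity_pt y t) ->
  (forall t, IZR n * h < t < (IZR n + 1) * h ->
     derivable_pt_lim y t (- a t * y (t - r t))) ->
  (forall s, IZR n * h < s < (IZR n + 1) * h ->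
     Rabs (y (IZR (n - kn r h n) * h) - y (s - r s)) <= w) ->
  zeta (n + 1)%Z = zeta n - coef a h n * zeta (n - kn r h n)%Z ->
  Rabs (y (IZR n * h) - zeta n) <= E ->
  Rabs (y (IZR (n - kn r h n) * h) - zeta (n - kn r h n)%Z) <= E ->
  Rabs (y (IZR (n + 1) * h) - zeta (n + 1)%Z) <= (1 + M * h) * E + M * w * h.
Proof.
  intros hn Hyc Hyd Hdelay Hz E1 E2.
  set (c := y (IZR (n - kn r h n) * h)) in *.
  assert (Hdef := dde_step_defect y w c n hn Hyc Hyd Hdelay).
  assert (E3 : Rabs (coef a h n * (c - zeta (n - kn r h n)%Z)) <= M * h * E).
  { rewrite Rabs_mult. apply Rmult_le_compat; try apply Rabs_pos; auto. apply coef_bound, hn. }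
  rewrite Hz, plus_IZR.
  replace (y ((IZR n + IZR 1) * h) - (zeta n - coef a h n * zeta (n - kn r h n)%Z)) with
    ((y ((IZR n + 1) * h) - y (IZR n * h) + coef a h n * c) + (y (IZR n * h) - zeta n)
      - coef a h n * (c - zeta (n - kn r h n)%Z)) by (simpl; ring).
  pose proof (Rabs_triang (y ((IZR n + 1) * h) - y (IZR n * h) + coef a h n * c)
                (y (IZR n * h) - zeta n)).
  unfold Rminus at 1. eapply Rle_trans; [apply Rabs_triang|]. rewrite Rabs_Ropp. lra.
Qed.

Lemma dde_grid_error (y : R -> R) (zeta : Z -> R) (n1 : Z) (J : nat) (w : R) :
  (0 <= n1)%Z -> 0 <= w ->
  dde_sol a r q (IZR n1 * h) y -> diff_sol a r h n1 zeta ->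
  (forall m, (n1 - Z.of_nat k <= m <= n1)%Z -> y (IZR m * h) = zeta m) ->
  (forall n, (n1 <= n < n1 + Z.of_nat J)%Z -> forall s, IZR n * h < s < (IZR n + 1) * h ->
     Rabs (y (IZR (n - kn r h n) * h) - y (s - r s)) <= w) ->
  forall m, (n1 - Z.of_nat k <= m <= n1 + Z.of_nat J)%Z ->
    Rabs (y (IZR m * h) - zeta m) <= w * ((1 + M * h) ^ J - 1).
Proof.
  intros hn1 hw [Hyc Hyd] Hz Hwin Hdelay.
  pose proof bound_nonneg as hM0.
  assert (hn1r : 0 <= IZR n1 * h) by (assert (0 <= IZR n1) by (apply IZR_le; lia); nra).
  enough (Hj : forall j : nat, (j <= J)%nat ->
            forall m, (n1 - Z.of_nat k <= m <= n1 + Z.of_nat j)%Z ->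
            Rabs (y (IZR m * h) - zeta m) <= w * ((1 + M * h) ^ j - 1))
    by exact (Hj J (le_n J)).
  induction j as [|j IH]; intros hjJ m hm.
  - simpl. rewrite Hwin by lia. rewrite Rminus_diag, Rabs_R0. lra.
  - specialize (IH ltac:(lia)).
    assert (hp : 0 <= M * h * (1 + M * h) ^ j)
      by (apply Rmult_le_pos; [nra | apply pow_le; nra]).
    assert (Hgrow : w * ((1 + M * h) ^ j - 1) <= w * ((1 + M * h) ^ S j - 1))
      by (apply Rmult_le_compat_l; [exact hw | simpl; nra]).
    destruct (Z.eq_dec m (n1 + Z.of_nat (S j))) as [em|nem];
      [| eapply Rle_trans; [apply IH; lia | exact Hgrow]].
    set (n := (n1 + Z.of_nat j)%Z).
    assert (hn1n : IZR n1 * h <= IZR n * h)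
      by (apply Rmult_le_compat_r; [lra | apply IZR_le; lia]).
    destruct (kn_bounds_int n ltac:(lia)) as [[hk1 hk2] _].
    replace m with (n + 1)%Z by lia.
    eapply Rle_trans; [apply (grid_error_step y zeta n w (w * ((1 + M * h) ^ j - 1)));
      [lra | | | | apply Hz; lia | apply IH; lia | apply IH; lia]|].
    + intros t ht. apply (cont_on_continuity_pt (IZR n1 * h - q)); [exact Hyc | nra].
    + intros t ht. apply Hyd. nra.
    + intros s hs. apply Hdelay; [lia | exact hs].
    + right. simpl. ring.
Qed.

Lemma delay_error_of_modulus (y : R -> R) (n1 : Z) (J : nat) (e w : R) :
  (0 <= n1)%Z ->
  (forall s t, 0 <= s -> 0 <= t -> Rabs (s - t) < h -> Rabs (r s - r t) < e) ->
  (forall u v, IZR n1 * h - q <= u <= IZR (n1 + Z.of_nat J) * h ->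
     IZR n1 * h - q <= v <= IZR (n1 + Z.of_nat J) * h ->
     Rabs (u - v) < h + e -> Rabs (y u - y v) <= w) ->
  forall n, (n1 <= n < n1 + Z.of_nat J)%Z -> forall s, IZR n * h < s < (IZR n + 1) * h ->
    Rabs (y (IZR (n - kn r h n) * h) - y (s - r s)) <= w.
Proof.
  intros hn1 Hr Hy n hn s hs.
  assert (hn1n : IZR n1 <= IZR n) by (apply IZR_le; lia).
  assert (hnJ : IZR n + 1 <= IZR (n1 + Z.of_nat J)) by (rewrite <- plus_IZR; apply IZR_le; lia).
  assert (hn1r : 0 <= IZR n1) by (apply IZR_le; lia).
  destruct (kn_bounds_int n ltac:(lia)) as [[hk1 hk2] hkr].
  assert (hkq : 0 <= IZR (kn r h n) * h <= q).
  { rewrite hqk, INR_IZR_INZ.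
    split; [apply Rmult_le_pos; [apply IZR_le|]; lia + lra|].
    apply Rmult_le_compat_r; [lra | apply IZR_le; lia]. }
  assert (hs0 : 0 <= s) by nra.
  pose proof (hr_range s hs0) as hrs.
  apply Hy.
  - rewrite minus_IZR. nra.
  - nra.
  - apply (delay_grid_gap r h e s n hkr hs), Hr; [exact hs0 | nra |].
    apply Rabs_lt_between. lra.
Qed.

Lemma grid_error_of_modulus (y : R -> R) (zeta : Z -> R) (n1 : Z) (J : nat) (e w : R) :
  (0 <= n1)%Z -> 0 <= w ->
  dde_sol a r q (IZR n1 * h) y -> diff_sol a r h n1 zeta ->
  (forall m, (n1 - Z.of_nat k <= m <= n1)%Z -> y (IZR m * h) = zeta m) ->
  (forall s t, 0 <= s -> 0 <= t -> Rabs (s - t) < h -> Rabs (r s - r t) < e) ->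
  (forall u v, IZR n1 * h - q <= u <= IZR (n1 + Z.of_nat J) * h ->
     IZR n1 * h - q <= v <= IZR (n1 + Z.of_nat J) * h ->
     Rabs (u - v) < h + e -> Rabs (y u - y v) <= w) ->
  forall m, (n1 - Z.of_nat k <= m <= n1 + Z.of_nat J)%Z ->
    Rabs (y (IZR m * h) - zeta m) <= w * ((1 + M * h) ^ J - 1).
Proof.
  intros hn1 hw Hy Hz Hwin Hr Hmod.
  exact (dde_grid_error y zeta n1 J w hn1 hw Hy Hz Hwin
           (delay_error_of_modulus y n1 J e w hn1 Hr Hmod)).
Qed.

Lemma diff_sol_growth (zeta : Z -> R) (n0 : Z) (B : R) : (0 <= n0)%Z -> 0 <= B ->
  diff_sol a r h n0 zeta ->
  (forall m, (n0 - Z.of_nat k <= m <= n0)%Z -> Rabs (zeta m) <= B) ->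
  forall j : nat, forall m, (n0 - Z.of_nat k <= m <= n0 + Z.of_nat j)%Z ->
    Rabs (zeta m) <= B * (1 + M * h) ^ j.
Proof.
  intros hn0 hB Hz Hw j. pose proof bound_nonneg as hM0.
  induction j as [|j IH]; intros m hm.
  - simpl. rewrite Rmult_1_r. apply Hw. lia.
  - assert (hp : 1 <= (1 + M * h) ^ j) by (apply pow_R1_Rle; nra).
    assert (0 <= B * (M * h) * (1 + M * h) ^ j)
      by (apply Rmult_le_pos; [apply Rmult_le_pos|]; nra).
    rewrite Nat2Z.inj_succ in hm.
    destruct (Z.eq_dec m (n0 + Z.succ (Z.of_nat j))) as [em|nem];
      [| eapply Rle_trans; [apply IH; lia | simpl; nra]].
    set (n := (n0 + Z.of_nat j)%Z).
    replace m with (n + 1)%Z by lia.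
    rewrite Hz by lia.
    destruct (kn_bounds_int n ltac:(lia)) as [[hk1 hk2] _].
    pose proof (IH n ltac:(lia)). pose proof (IH (n - kn r h n)%Z ltac:(lia)).
    pose proof (coef_bound_int n ltac:(lia)).
    unfold Rminus. eapply Rle_trans; [apply Rabs_triang|]. rewrite Rabs_Ropp, Rabs_mult.
    assert (Rabs (coef a h n) * Rabs (zeta (n - kn r h n)%Z) <= M * h * (B * (1 + M * h) ^ j))
      by (apply Rmult_le_compat; try apply Rabs_pos; auto).
    simpl. nra.
Qed.

End Discretization.

Lemma scheme_converges (q : R) (a r : R -> R) (M : R)
  (hq : 0 < q)
  (ha_cont : cont_on (fun t => 0 <= t) a)
  (hr_range : forall t, 0 <= t -> 0 <= r t <= q)
  (hM : forall t, 0 <= t -> Rabs (a t) <= M)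
  (hr_unif : forall eps, 0 < eps -> exists del, 0 < del /\
     forall s t, 0 <= s -> 0 <= t -> Rabs (s - t) < del -> Rabs (r s - r t) < eps) :
  forall (phi : R -> R) t, 0 < t ->
  forall x, dde_sol a r q 0 x -> (forall s, -q <= s <= 0 -> x s = phi s) ->
  forall eps, 0 < eps -> exists K : nat, forall k : nat, (K <= k)%nat -> (1 <= k)%nat ->
    forall zeta, diff_sol a r (q / INR k) 0 zeta ->
      (forall m, (- Z.of_nat k <= m <= 0)%Z -> zeta m = phi (IZR m * (q / INR k))) ->
      Rabs (x t - zeta (Int_part (t / (q / INR k)))) < eps.
Proof.
  intros phi t ht x Hx Hxphi eps heps.
  pose proof (bound_nonneg a M hM) as hM0.
  (* [exp (M t)] bounds the Gronwall factor of [0, t]. *)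
  set (w := eps / (2 * exp (M * t))).
  assert (hw : 0 < w) by (apply Rdiv_lt_0_compat; [lra | pose proof (exp_pos (M * t)); lra]).
  assert (hwexp : w * exp (M * t) = eps / 2) by (unfold w; field; apply Rgt_not_eq, exp_pos).
  assert (hexp1 : 1 <= exp (M * t)) by (rewrite <- exp_0; apply exp_le_exp; nra).
  assert (hx_cont : cont_on (fun s => - q <= s) x)
    by (replace (- q) with (0 - q) by ring; exact (proj1 Hx)).
  destruct (cont_on_unif_interval x (- q) t hx_cont w hw) as [del [hdel Hdel]].
  destruct (hr_unif (del / 2)) as [dr [hdr Hdr]]; [lra|].
  destruct (exists_small_step q (Rmin (del / 2) dr)) as [K HK];
    [exact hq | apply Rmin_pos; lra|].
  exists K. intros k hk hk1 zeta Hz Hzphi.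
  specialize (HK k hk hk1).
  destruct (step_pos q k hq hk1) as [hh hqk].
  set (h := q / INR k) in *.
  pose proof (Rmin_l (del / 2) dr); pose proof (Rmin_r (del / 2) dr).
  change (Int_part (t / h)) with (cell_index h t).
  set (N := cell_index h t).
  destruct (cell_index_bounds h t hh) as [hN1 hN2]. fold N in hN1, hN2.
  assert (hN0 : (0 <= N)%Z).
  { enough (0 <= N <= N + 1)%Z by lia.
    apply (cell_index_range h t 0 (N + 1) hh); rewrite ?plus_IZR; simpl; lra. }
  assert (hNr : 0 <= IZR N) by (apply IZR_le, hN0).
  assert (Hgrid : Rabs (x (IZR N * h) - zeta N) <= w * ((1 + M * h) ^ Z.to_nat N - 1)).
  { apply (grid_error_of_modulus a r q M h k hq hh hqk ha_cont hM hr_range x zeta 0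
             (Z.to_nat N) (del / 2) w);
      [lia | lra | rewrite Rmult_0_l; exact Hx | exact Hz | | intros; apply Hdr; auto; lra
      | | rewrite Z2Nat.id; lia].
    - intros m hm. pose proof (grid_window h k 0 m hh ltac:(lia)).
      rewrite Hzphi, Hxphi by (lia || lra). reflexivity.
    - rewrite Z2Nat.id, Z.add_0_l by exact hN0.
      intros u v hu hv huv. left. apply Hdel; lra. }
  assert (Hpow : (1 + M * h) ^ Z.to_nat N <= exp (M * t)).
  { eapply Rle_trans; [apply pow_1plus_le_exp; nra|].
    rewrite INR_IZR_INZ, Z2Nat.id by exact hN0. apply exp_le_exp. nra. }
  assert (Hlast : Rabs (x t - x (IZR N * h)) < w)
    by (apply Hdel; [lra | nra | apply Rabs_lt_between; lra]).
  replace (x t - zeta N) with ((x t - x (IZR N * h)) + (x (IZR N * h) - zeta N)) by ring.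
  eapply Rle_lt_trans; [apply Rabs_triang|].
  assert (w * (1 + M * h) ^ Z.to_nat N <= w * exp (M * t)) by (apply Rmult_le_compat_l; lra).
  nra.
Qed.

(** * Existence of solutions by Picard iteration *)

Definition majorant (P x : R) (m : nat) : R := P * x ^ S m / INR (fact (S m)).

Lemma INR_fact_pos (n : nat) : 0 < INR (fact n).
Proof. apply lt_0_INR, lt_O_fact. Qed.

Lemma majorant_nonneg (P x : R) (m : nat) : 0 <= P -> 0 <= x -> 0 <= majorant P x m.
Proof.
  intros hP hx. unfold majorant.
  apply Rmult_le_pos; [apply Rmult_le_pos; auto; apply pow_le; auto|].
  left; apply Rinv_0_lt_compat, INR_fact_pos.
Qed.

Lemma majorant_le (P x X : R) (m : nat) : 0 <= P -> 0 <= x <= X ->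
  majorant P x m <= majorant P X m.
Proof.
  intros hP hx. unfold majorant, Rdiv.
  apply Rmult_le_compat_r; [left; apply Rinv_0_lt_compat, INR_fact_pos|].
  apply Rmult_le_compat_l; auto. apply pow_incr; auto.
Qed.

Lemma majorant_succ_le_half (P x : R) (m : nat) : 0 <= P -> 0 <= x -> 2 * x <= INR (S (S m)) ->
  majorant P x (S m) <= majorant P x m / 2.
Proof.
  intros hP hx h.
  assert (E : majorant P x (S m) = majorant P x m * x / INR (S (S m))).
  { unfold majorant. rewrite (fact_simpl (S m)), mult_INR. simpl pow.
    pose proof (INR_fact_pos (S m)). assert (0 < INR (S (S m))) by (apply lt_0_INR; lia).
    field. lra. }
  rewrite E. pose proof (majorant_nonneg P x m hP hx).
  assert (0 < INR (S (S m))) by (apply lt_0_INR; lia).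
  unfold Rdiv. apply Rmult_le_reg_r with (INR (S (S m))); auto.
  rewrite Rmult_assoc, Rinv_l by lra. nra.
Qed.

Lemma derivable_pt_lim_majorant (P M sg x : R) (m : nat) :
  derivable_pt_lim (fun y => majorant P (M * (y - sg)) (S m)) x
    (M * majorant P (M * (x - sg)) m).
Proof.
  unfold majorant.
  assert (H1 : derivable_pt_lim (fun y => M * (y - sg)) x M).
  { apply (derivable_pt_lim_ext (mult_real_fct M (fun y => y - sg))); [reflexivity|].
    rewrite <- (Rmult_1_r M) at 2. apply derivable_pt_lim_scal.
    replace 1 with (1 - 0) by ring.
    apply derivable_pt_lim_minus; [apply derivable_pt_lim_id | apply derivable_pt_lim_const]. }
  assert (H3 := derivable_pt_lim_scal _ (P / INR (fact (S (S m)))) x _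
                  (derivable_pt_lim_comp _ (fun y => y ^ S (S m)) x M _ H1
                     (derivable_pt_lim_pow _ (S (S m))))).
  unfold mult_real_fct, comp in H3.
  replace (M * (P * (M * (x - sg)) ^ S m / INR (fact (S m)))) with
    (P / INR (fact (S (S m))) * (INR (S (S m)) * (M * (x - sg)) ^ Init.Nat.pred (S (S m)) * M)).
  - eapply derivable_pt_lim_ext; [|exact H3]. intros y. simpl.
    field. pose proof (INR_fact_pos (S (S m))). simpl in H. lra.
  - simpl pred. rewrite (fact_simpl (S m)), mult_INR. pose proof (INR_fact_pos (S m)).
    assert (0 < INR (S (S m))) by (apply lt_0_INR; lia). field. lra.
Qed.

Section MajorizedSequence.

Variables (u : nat -> R) (P x : R).
Hypotheses (hP : 0 <= P) (hx : 0 <= x)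
  (Hu : forall m, Rabs (u (S m) - u m) <= majorant P x m).

Lemma majorized_tail (m : nat) : 2 * x <= INR (S (S m)) ->
  forall p, Rabs (u (p + m)%nat - u m) + 2 * majorant P x (p + m) <= 2 * majorant P x m.
Proof.
  intros hm p. induction p as [|p IH]; [simpl; rewrite Rminus_diag, Rabs_R0; lra|].
  replace (S p + m)%nat with (S (p + m)) by lia.
  assert (2 * x <= INR (S (S (p + m)))) by (eapply Rle_trans; [exact hm | apply le_INR; lia]).
  pose proof (majorant_succ_le_half P x (p + m) hP hx H).
  pose proof (Hu (p + m)%nat).
  pose proof (Rabs_triang (u (S (p + m)) - u (p + m)%nat) (u (p + m)%nat - u m)).
  replace (u (S (p + m)) - u (p + m)%nat + (u (p + m)%nat - u m))
    with (u (S (p + m)) - u m) in * by ring.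
  lra.
Qed.

End MajorizedSequence.

(* Once [m + 2 >= 2 x] the majorant at least halves at each step, so it tends to 0. *)
Lemma majorant_eventually_small (P X : R) : 0 <= P -> 0 <= X -> forall eps, 0 < eps ->
  exists m0, forall m, (m0 <= m)%nat -> 2 * X <= INR (S (S m)) /\ majorant P X m <= eps.
Proof.
  intros hP hX eps he.
  destruct (INR_unbounded (2 * X)) as [m1 hm1].
  set (C := majorant P X m1). assert (hC : 0 <= C) by (apply majorant_nonneg; auto).
  destruct (INR_unbounded (C / eps)) as [i hi].
  assert (Hhalf : forall j, (m1 <= j)%nat -> 2 * X <= INR (S (S j))).
  { intros j hj. assert (INR m1 <= INR (S (S j))) by (apply le_INR; lia). lra. }
  assert (Hdecr : forall j, (m1 <= j)%nat -> majorant P X (S j) <= majorant P X j).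
  { intros j hj. pose proof (majorant_nonneg P X j hP hX).
    pose proof (majorant_succ_le_half P X j hP hX (Hhalf j hj)). lra. }
  assert (Hgeom : forall p, majorant P X (p + m1) <= C / 2 ^ p).
  { induction p as [|p IH]; [simpl; unfold C; lra|].
    replace (S p + m1)%nat with (S (p + m1)) by lia.
    eapply Rle_trans; [apply majorant_succ_le_half; auto; apply Hhalf; lia|].
    simpl pow. unfold Rdiv in *. rewrite Rinv_mult. nra. }
  assert (Hmono : forall p, majorant P X (p + (i + m1)) <= majorant P X (i + m1)).
  { induction p as [|p IH]; [simpl; lra|].
    eapply Rle_trans; [|exact IH]. apply Hdecr. lia. }
  exists (i + m1)%nat. intros m hm. split; [apply Hhalf; lia|].
  replace m with ((m - (i + m1)) + (i + m1))%nat by lia.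
  eapply Rle_trans; [apply Hmono|]. eapply Rle_trans; [apply Hgeom|].
  assert (INR i < 2 ^ i) by apply INR_lt_pow2.
  assert (0 < 2 ^ i) by (apply pow_lt; lra).
  unfold Rdiv in *. apply Rmult_le_reg_r with (2 ^ i); auto.
  rewrite Rmult_assoc, Rinv_l by lra.
  assert (C * / eps * eps = C) by (field; lra). nra.
Qed.

Lemma majorized_converges (u : nat -> R) (P x : R) : 0 <= P -> 0 <= x ->
  (forall m, Rabs (u (S m) - u m) <= majorant P x m) ->
  is_lim_seq u (real (Lim_seq u)) /\
  forall m, 2 * x <= INR (S (S m)) -> Rabs (real (Lim_seq u) - u m) <= 2 * majorant P x m.
Proof.
  intros hP hx Hu.
  pose proof (majorized_tail u P x hP hx Hu) as Ht.
  assert (Hex : ex_finite_lim_seq u).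
  { apply ex_lim_seq_cauchy_corr. intros [eps he].
    destruct (majorant_eventually_small P x hP hx (eps / 5)) as [m0 Hm0]; [lra|].
    exists m0. intros n m hn hm. simpl.
    destruct (Hm0 m0 (le_n _)) as [c1 c2].
    pose proof (Ht m0 c1 (n - m0)%nat). pose proof (Ht m0 c1 (m - m0)%nat).
    replace (n - m0 + m0)%nat with n in * by lia.
    replace (m - m0 + m0)%nat with m in * by lia.
    pose proof (majorant_nonneg P x n hP hx). pose proof (majorant_nonneg P x m hP hx).
    replace (u n - u m) with ((u n - u m0) - (u m - u m0)) by ring.
    eapply Rle_lt_trans; [apply Rabs_triang|]. rewrite Rabs_Ropp. lra. }
  destruct Hex as [l Hl].
  rewrite (is_lim_seq_unique u l Hl). split; [exact Hl|].
  intros m hm. apply Rnot_lt_le. intros Hc.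
  apply is_lim_seq_spec in Hl.
  destruct (Hl (mkposreal _ (proj2 (Rlt_0_minus _ _) Hc))) as [N HN].
  specialize (HN (N + m)%nat ltac:(lia)). simpl in HN.
  pose proof (Ht m hm N). pose proof (majorant_nonneg P x (N + m) hP hx).
  rewrite Rabs_minus_sym in HN.
  pose proof (Rabs_triang (l - u (N + m)%nat) (u (N + m)%nat - u m)).
  replace (l - u (N + m)%nat + (u (N + m)%nat - u m)) with (l - u m) in * by ring.
  simpl in Hc. lra.
Qed.

Section PicardIteration.

Variables (ae re pe : R -> R) (sg M P : R).
Hypotheses (ae_cont : forall t, continuity_pt ae t) (re_cont : forall t, continuity_pt re t)
  (pe_cont : forall t, continuity_pt pe t) (hM : 0 <= M) (hP : 0 <= P)
  (ae_bound : forall t, Rabs (ae t) <= M) (re_nonneg : forall t, 0 <= re t)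
  (pe_bound : forall t, Rabs (pe t) <= P).

(* Picard iterates of [y' = - ae t y (t - re t)] for [t > sg], [y = pe] for [t <= sg]. *)
Fixpoint picard (m : nat) (t : R) : R :=
  match m with
  | O => pe t
  | S m' => pe t - RInt (fun s => ae s * picard m' (s - re s)) sg (Rmax sg t)
  end.

Lemma continuity_pt_delayed (f : R -> R) : (forall t, continuity_pt f t) ->
  forall s, continuity_pt (fun s => ae s * f (s - re s)) s.
Proof.
  intros Hf s. apply continuity_pt_mult; [apply ae_cont|].
  apply (continuity_pt_comp (fun s => s - re s) f); [|apply Hf].
  apply continuity_pt_minus; [apply continuity_pt_id | apply re_cont].
Qed.

Lemma picard_cont (m : nat) (t : R) : continuity_pt (picard m) t.
Proof.
  revert t. induction m as [|m IH]; intros t; [apply pe_cont|].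
  apply continuity_pt_minus; [apply pe_cont|].
  apply (continuity_pt_comp (Rmax sg) (fun x => RInt _ sg x));
    [apply continuity_pt_Rmax | apply continuity_pt_RInt, continuity_pt_delayed, IH].
Qed.

Lemma picard_increment (m : nat) (t : R) :
  Rabs (picard (S m) t - picard m t) <= majorant P (M * (Rmax sg t - sg)) m.
Proof.
  revert t. induction m as [|m IH]; intros t;
    set (tau := Rmax sg t); assert (htau : sg <= tau) by apply Rmax_l.
  - simpl. fold tau.
    replace (pe t - RInt (fun s => ae s * pe (s - re s)) sg tau - pe t)
      with (- RInt (fun s => ae s * pe (s - re s)) sg tau) by ring.
    rewrite Rabs_Ropp. eapply Rle_trans.
    + apply abs_RInt_le_const;
        [exact htau | apply ex_RInt_of_continuity, continuity_pt_delayed, pe_cont|].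
      intros s _. rewrite Rabs_mult. apply Rmult_le_compat; try apply Rabs_pos; auto.
    + right. unfold majorant. simpl. field.
  - set (g := fun m s => ae s * picard m (s - re s)).
    assert (Hg : forall m s, continuity_pt (g m) s)
      by (intros; apply continuity_pt_delayed, picard_cont).
    replace (picard (S (S m)) t - picard (S m) t)
      with (- ((RInt (g (S m)) sg tau - RInt (g m) sg tau)
               - (RInt (g (S m)) sg sg - RInt (g m) sg sg)))
      by (rewrite !RInt_point; unfold zero, g; simpl; fold tau; ring).
    rewrite Rabs_Ropp.
    replace (majorant P (M * (tau - sg)) (S m))
      with (majorant P (M * (tau - sg)) (S m) - majorant P (M * (sg - sg)) (S m))
      by (rewrite Rminus_diag, Rmult_0_r; unfold majorant; simpl; field;
          pose proof (INR_fact_pos (S (S m))); simpl in *; lra).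
    apply (increment_le_of_derive_dominated
             (fun x => RInt (g (S m)) sg x - RInt (g m) sg x)
             (fun x => majorant P (M * (x - sg)) (S m))
             (fun x => g (S m) x - g m x)
             (fun x => M * majorant P (M * (x - sg)) m)); [exact htau | |].
    + intros x hx. split; [|split].
      * apply derivable_pt_lim_minus; apply derivable_pt_lim_RInt, Hg.
      * apply derivable_pt_lim_majorant.
      * unfold g. rewrite <- Rmult_minus_distr_l, Rabs_mult.
        apply Rmult_le_compat; try apply Rabs_pos; auto.
        eapply Rle_trans; [apply IH|]. apply majorant_le; [exact hP|].
        pose proof (re_nonneg x).
        assert (0 <= Rmax sg (x - re x) - sg <= x - sg)
          by (unfold Rmax; destruct (Rle_dec sg (x - re x)); lra).
        split; nra.
    + intros x hx. split.
      * apply continuity_pt_minus; apply continuity_pt_RInt, Hg.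
      * apply derivable_continuous_pt. eexists. apply derivable_pt_lim_majorant.
Qed.

Definition picard_limit (t : R) : R := real (Lim_seq (fun m => picard m t)).

Lemma picard_limit_unif (T : R) : sg <= T -> forall eps, 0 < eps ->
  exists m0, forall m, (m0 <= m)%nat -> forall t, t <= T ->
    Rabs (picard_limit t - picard m t) <= eps.
Proof.
  intros hT eps he.
  destruct (majorant_eventually_small P (M * (T - sg)) hP ltac:(nra) (eps / 2))
    as [m0 Hm0]; [lra|].
  exists m0. intros m hm t ht. destruct (Hm0 m hm) as [c1 c2].
  assert (hx : 0 <= M * (Rmax sg t - sg) <= M * (T - sg)).
  { assert (sg <= Rmax sg t <= T) by (split; [apply Rmax_l | apply Rmax_lub; lra]).
    split; nra. }
  assert (HL := majorized_converges (fun m => picard m t) P (M * (Rmax sg t - sg)) hP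
                  ltac:(lra) (fun m => picard_increment m t)).
  eapply Rle_trans; [apply (proj2 HL); lra|].
  pose proof (majorant_le P _ _ m hP hx). lra.
Qed.

Lemma picard_limit_cont (t : R) : continuity_pt picard_limit t.
Proof.
  apply continuity_pt_of_eps. intros eps he.
  destruct (picard_limit_unif (Rmax sg (t + 1)) (Rmax_l _ _) (eps / 4)) as [m0 Hm0]; [lra|].
  destruct (continuity_pt_eps _ _ (picard_cont m0 t) (eps / 4)) as [d [hd Hd]]; [lra|].
  exists (Rmin d 1). split; [apply Rmin_pos; lra|].
  intros y hy. pose proof (Rmin_l d 1). pose proof (Rmin_r d 1). pose proof (Rmax_r sg (t + 1)).
  apply Rabs_lt_between in hy as hy'.
  pose proof (Hm0 m0 (le_n _) y ltac:(lra)). pose proof (Hm0 m0 (le_n _) t ltac:(lra)).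
  pose proof (Hd y ltac:(lra)).
  pose proof (Rabs_triang (picard_limit y - picard m0 y) (picard m0 y - picard m0 t)).
  pose proof (Rabs_triang (picard_limit y - picard m0 t) (picard m0 t - picard_limit t)).
  rewrite Rabs_minus_sym with (x := picard m0 t) in *.
  replace (picard_limit y - picard m0 y + (picard m0 y - picard m0 t))
    with (picard_limit y - picard m0 t) in * by ring.
  replace (picard_limit y - picard m0 t + (picard m0 t - picard_limit t))
    with (picard_limit y - picard_limit t) in * by ring.
  lra.
Qed.

Let g_lim := fun s => ae s * picard_limit (s - re s).

Lemma picard_limit_fixpoint (t : R) :
  picard_limit t = pe t - RInt g_lim sg (Rmax sg t).
Proof.
  set (tau := Rmax sg t). assert (htau : sg <= tau) by apply Rmax_l.
  apply cond_eq. intros e he.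
  enough (Rabs (picard_limit t - (pe t - RInt g_lim sg tau)) <= e / 2) by lra.
  set (eps := e / 2). assert (0 < eps) by (unfold eps; lra).
  set (C := 1 + M * (tau - sg)). assert (hC : 1 <= C) by (unfold C; nra).
  destruct (picard_limit_unif tau htau (eps / C)) as [m0 Hm0]; [apply Rdiv_lt_0_compat; lra|].
  set (g := fun s => ae s * picard m0 (s - re s)).
  assert (H1 := Hm0 (S m0) ltac:(lia) t (Rmax_r _ _)).
  assert (H2 : Rabs (RInt g_lim sg tau - RInt g sg tau) <= (tau - sg) * (M * (eps / C))).
  { rewrite <- (RInt_minus (V := R_CompleteNormedModule));
      [| apply ex_RInt_of_continuity, continuity_pt_delayed, picard_limit_cont
       | apply ex_RInt_of_continuity, continuity_pt_delayed, picard_cont].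
    apply abs_RInt_le_const; [exact htau | |].
    - apply ex_RInt_of_continuity. intros s. apply continuity_pt_minus;
        apply continuity_pt_delayed; [apply picard_limit_cont | apply picard_cont].
    - intros s hs. unfold g_lim, g. simpl. rewrite <- Rmult_minus_distr_l, Rabs_mult.
      apply Rmult_le_compat; try apply Rabs_pos; auto.
      apply Hm0; [lia|]. pose proof (re_nonneg s). lra. }
  replace (picard_limit t - (pe t - RInt g_lim sg tau))
    with ((picard_limit t - picard (S m0) t) + (RInt g_lim sg tau - RInt g sg tau))
    by (simpl; fold tau; unfold g; ring).
  eapply Rle_trans; [apply Rabs_triang|].
  assert ((tau - sg) * (M * (eps / C)) + eps / C = eps) by (unfold C in *; field; lra).
  lra.
Qed.

Lemma picard_limit_sol (t : R) : sg < t -> (forall s, sg <= s -> pe s = pe sg) ->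
  derivable_pt_lim picard_limit t (- (ae t * picard_limit (t - re t))).
Proof.
  intros ht Hpc. apply is_derive_Reals.
  apply is_derive_ext_loc with (fun s => pe sg - RInt g_lim sg s).
  - exists (mkposreal _ (proj2 (Rlt_0_minus _ _) ht)). intros y Hy.
    change (Rabs (y - t) < t - sg) in Hy. apply Rabs_lt_between in Hy.
    rewrite (picard_limit_fixpoint y), (Rmax_right sg y), (Hpc y) by lra. reflexivity.
  - apply is_derive_Reals. replace (- (ae t * picard_limit (t - re t))) with (0 - g_lim t)
      by (unfold g_lim; ring).
    apply derivable_pt_lim_minus; [apply derivable_pt_lim_const|].
    apply derivable_pt_lim_RInt, continuity_pt_delayed, picard_limit_cont.
Qed.

Lemma picard_limit_init (t : R) : t <= sg -> picard_limit t = pe t.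
Proof.
  intros ht. rewrite picard_limit_fixpoint, Rmax_left, RInt_point by lra.
  unfold zero; simpl; ring.
Qed.

End PicardIteration.

Lemma dde_sol_exists (a r psi : R -> R) (q sg M P : R) :
  0 < q -> 0 <= sg -> cont_on (fun t => 0 <= t) a -> (forall t, 0 <= t -> Rabs (a t) <= M) ->
  (forall t, 0 <= t -> 0 <= r t <= q) -> cont_on (fun t => 0 <= t) r ->
  cont_on (fun s => sg - q <= s <= sg) psi -> (forall s, sg - q <= s <= sg -> Rabs (psi s) <= P) ->
  exists y, dde_sol a r q sg y /\ forall s, sg - q <= s <= sg -> y s = psi s.
Proof.
  intros hq hsg Ha HaM Hr Hrc Hpsi HpP.
  (* Picard iteration runs on all of R: extend [a] and [r] constantly to the left
     of 0, and [psi] constantly outside its window. *)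
  set (clamp := fun s => Rmin sg (Rmax (sg - q) s)).
  assert (Hclamp : forall s, sg - q <= clamp s <= sg).
  { intros s; unfold clamp, Rmin, Rmax; destruct (Rle_dec (sg - q) s), (Rle_dec sg _); lra. }
  assert (Hclamp_id : forall s, sg - q <= s <= sg -> clamp s = s).
  { intros s hs. unfold clamp. rewrite Rmax_right, Rmin_right by lra. reflexivity. }
  set (ae := fun s => a (Rmax 0 s)). set (re := fun s => r (Rmax 0 s)).
  set (pe := fun s => psi (clamp s)).
  assert (Hpe_const : forall t, sg <= t -> pe t = pe sg).
  { intros t ht. unfold pe, clamp. rewrite (Rmax_right (sg - q) t), (Rmax_right (sg - q) sg),
      Rmin_left, Rmin_left by lra. reflexivity. }
  assert (Hae : forall t, continuity_pt ae t) by exact (continuity_pt_Rmax_comp 0 a Ha).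
  assert (Hre : forall t, continuity_pt re t) by exact (continuity_pt_Rmax_comp 0 r Hrc).
  assert (Hpe : forall t, continuity_pt pe t)
    by (apply (continuity_pt_clamp_comp (sg - q) sg psi Hpsi); lra).
  assert (hM : 0 <= M) by (pose proof (HaM 0 (Rle_refl 0)); pose proof (Rabs_pos (a 0)); lra).
  assert (hP : 0 <= P) by (pose proof (HpP sg ltac:(lra)); pose proof (Rabs_pos (psi sg)); lra).
  assert (Hae_bound : forall t, Rabs (ae t) <= M) by (intros t; apply HaM, Rmax_l).
  assert (Hre_nonneg : forall t, 0 <= re t) by (intros t; apply Hr, Rmax_l).
  assert (Hpe_bound : forall t, Rabs (pe t) <= P) by (intros t; apply HpP, Hclamp).
  exists (picard_limit ae re pe sg). split; [split|].
  - intros t _ eps he.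
    destruct (continuity_pt_eps _ t (picard_limit_cont ae re pe sg M P Hae Hre Hpe hM hP
                Hae_bound Hre_nonneg Hpe_bound t) eps he) as [d [hd Hd]].
    exists d; split; auto.
  - intros t ht.
    assert (Hd := picard_limit_sol ae re pe sg M P Hae Hre Hpe hM hP
                    Hae_bound Hre_nonneg Hpe_bound t ht Hpe_const).
    unfold ae, re in Hd. rewrite Rmax_right in Hd by lra.
    rewrite Ropp_mult_distr_l in Hd. exact Hd.
  - intros s hs.
    rewrite (picard_limit_init ae re pe sg M P Hae Hre Hpe hM hP
               Hae_bound Hre_nonneg Hpe_bound) by lra.
    unfold pe. rewrite Hclamp_id by exact hs. reflexivity.
Qed.

(** * Linear interpolation of grid functions *)

Definition interp (zeta : Z -> R) (h s : R) : R :=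
  zeta (cell_index h s)
  + (s / h - IZR (cell_index h s)) * (zeta (cell_index h s + 1)%Z - zeta (cell_index h s)).

Section Interpolation.

Variables (zeta : Z -> R) (h : R).
Hypothesis hh : 0 < h.

Lemma cell_frac_range (s : R) : 0 <= s / h - IZR (cell_index h s) < 1.
Proof. unfold cell_index. destruct (base_Int_part (s / h)). lra. Qed.

Lemma interp_grid (m : Z) : interp zeta h (IZR m * h) = zeta m.
Proof.
  unfold interp. rewrite cell_index_grid by exact hh.
  replace (IZR m * h / h) with (IZR m) by (field; lra). ring.
Qed.

Lemma interp_near (s : R) :
  Rabs (interp zeta h s - zeta (cell_index h s))
  <= Rabs (zeta (cell_index h s + 1)%Z - zeta (cell_index h s)).
Proof.
  unfold interp. destruct (cell_frac_range s).
  replace (_ + _ - _) with ((s / h - IZR (cell_index h s))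
    * (zeta (cell_index h s + 1)%Z - zeta (cell_index h s))) by ring.
  rewrite Rabs_mult, (Rabs_right (s / h - _)) by lra.
  pose proof (Rabs_pos (zeta (cell_index h s + 1)%Z - zeta (cell_index h s))). nra.
Qed.

Lemma interp_bound (s B : R) :
  Rabs (zeta (cell_index h s)) <= B -> Rabs (zeta (cell_index h s + 1)%Z) <= B ->
  Rabs (interp zeta h s) <= B.
Proof.
  intros h1 h2. unfold interp. destruct (cell_frac_range s) as [t1 t2].
  set (th := s / h - IZR (cell_index h s)) in *.
  replace (_ + _) with ((1 - th) * zeta (cell_index h s) + th * zeta (cell_index h s + 1)%Z)
    by ring.
  eapply Rle_trans; [apply Rabs_triang|]. rewrite !Rabs_mult.
  rewrite (Rabs_right th), (Rabs_right (1 - th)) by lra.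
  pose proof (Rabs_pos (zeta (cell_index h s))). nra.
Qed.

Lemma interp_lipschitz_local (D s t : R) : s <= t -> t - s < h ->
  Rabs (zeta (cell_index h s + 1)%Z - zeta (cell_index h s)) <= D ->
  Rabs (zeta (cell_index h t + 1)%Z - zeta (cell_index h t)) <= D ->
  Rabs (interp zeta h t - interp zeta h s) <= D * ((t - s) / h).
Proof.
  intros hst hst2 H1 H2.
  destruct (cell_index_bounds h s hh) as [c1 c2]. destruct (cell_index_bounds h t hh) as [d1 d2].
  assert (e1 : (cell_index h s < cell_index h t + 1)%Z)
    by (apply lt_IZR; rewrite plus_IZR; nra).
  assert (e2 : (cell_index h t < cell_index h s + 2)%Z)
    by (apply lt_IZR; rewrite plus_IZR; nra).
  assert (hD : 0 <= D) by (eapply Rle_trans; [apply Rabs_pos | exact H1]).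
  assert (hts : 0 <= (t - s) / h)
    by (apply Rmult_le_pos; [lra | left; apply Rinv_0_lt_compat; lra]).
  destruct (cell_frac_range s) as [t1 t2]. destruct (cell_frac_range t) as [u1 u2].
  unfold interp.
  destruct (Z.eq_dec (cell_index h t) (cell_index h s)) as [E|E].
  - rewrite E in *.
    replace (_ - _) with ((t - s) / h
      * (zeta (cell_index h s + 1)%Z - zeta (cell_index h s))) by (field; lra).
    rewrite Rabs_mult, Rabs_right by lra. nra.
  - assert (E2 : cell_index h t = (cell_index h s + 1)%Z) by lia.
    rewrite E2 in *. rewrite plus_IZR in *.
    set (j := cell_index h s) in *.
    replace (_ - _) with ((1 - (s / h - IZR j)) * (zeta (j + 1)%Z - zeta j)
       + (t / h - (IZR j + 1)) * (zeta (j + 1 + 1)%Z - zeta (j + 1)%Z)) by ring.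
    eapply Rle_trans; [apply Rabs_triang|]. rewrite !Rabs_mult.
    rewrite (Rabs_right (1 - _)), (Rabs_right (t / h - _)) by lra.
    assert ((t - s) / h = (1 - (s / h - IZR j)) + (t / h - (IZR j + 1))) by (field; lra).
    rewrite H. nra.
Qed.

Variables (D : R) (lo hi : Z).
Hypothesis Hincr : forall l, (lo <= l <= hi)%Z -> Rabs (zeta (l + 1)%Z - zeta l) <= D.

Lemma grid_lipschitz (i j : Z) : (lo <= i <= hi + 1)%Z -> (lo <= j <= hi + 1)%Z ->
  Rabs (zeta j - zeta i) <= D * Rabs (IZR j - IZR i).
Proof.
  intros hi0 hj.
  assert (Hup : forall d : nat, forall i, (lo <= i)%Z -> (i + Z.of_nat d <= hi + 1)%Z ->
            Rabs (zeta (i + Z.of_nat d)%Z - zeta i) <= D * INR d).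
  { clear i j hi0 hj. induction d as [|d IH]; intros i hi0 hi1.
    - simpl. rewrite Z.add_0_r, Rminus_diag, Rabs_R0. lra.
    - rewrite Nat2Z.inj_succ, S_INR.
      replace (i + Z.succ (Z.of_nat d))%Z with ((i + Z.of_nat d) + 1)%Z by lia.
      pose proof (Hincr (i + Z.of_nat d)%Z ltac:(lia)). pose proof (IH i hi0 ltac:(lia)).
      pose proof (Rabs_triang (zeta (i + Z.of_nat d + 1)%Z - zeta (i + Z.of_nat d)%Z)
                    (zeta (i + Z.of_nat d)%Z - zeta i)).
      replace (zeta (i + Z.of_nat d + 1)%Z - zeta (i + Z.of_nat d)%Z
               + (zeta (i + Z.of_nat d)%Z - zeta i))
        with (zeta (i + Z.of_nat d + 1)%Z - zeta i) in * by ring.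
      lra. }
  assert (Hle : forall i j, (lo <= i <= j)%Z -> (j <= hi + 1)%Z ->
            Rabs (zeta j - zeta i) <= D * Rabs (IZR j - IZR i)).
  { intros i' j' hij hj'.
    pose proof (Hup (Z.to_nat (j' - i')) i' ltac:(lia) ltac:(lia)) as Hd.
    rewrite Z2Nat.id in Hd by lia. replace (i' + (j' - i'))%Z with j' in Hd by lia.
    rewrite INR_IZR_INZ, Z2Nat.id, minus_IZR in Hd by lia.
    rewrite (Rabs_right (IZR j' - IZR i')); [exact Hd|].
    apply Rle_ge. cut (IZR i' <= IZR j'); [lra | apply IZR_le; lia]. }
  destruct (Z.le_ge_cases i j) as [c|c]; [apply Hle; lia|].
  rewrite Rabs_minus_sym, (Rabs_minus_sym (IZR j)). apply Hle; lia.
Qed.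

Lemma interp_modulus (s t : R) :
  (lo <= cell_index h s <= hi)%Z -> (lo <= cell_index h t <= hi)%Z ->
  Rabs (interp zeta h s - interp zeta h t) <= D * (Rabs (s - t) / h + 3).
Proof.
  intros hs ht.
  pose proof (interp_near s). pose proof (interp_near t).
  pose proof (Hincr _ hs). pose proof (Hincr _ ht).
  pose proof (grid_lipschitz (cell_index h t) (cell_index h s) ltac:(lia) ltac:(lia)).
  destruct (cell_frac_range s). destruct (cell_frac_range t).
  assert (HE : Rabs (s - t) / h = Rabs (s / h - t / h)).
  { unfold Rdiv. rewrite <- Rmult_minus_distr_r, Rabs_mult, (Rabs_right (/ h)); auto.
    left; apply Rinv_0_lt_compat; lra. }
  assert (Rabs (IZR (cell_index h s) - IZR (cell_index h t)) <= Rabs (s / h - t / h) + 1).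
  { apply Rabs_le. pose proof (Rle_abs (- (s / h - t / h))) as Q1. rewrite Rabs_Ropp in Q1.
    pose proof (Rle_abs (s / h - t / h)). lra. }
  assert (hD : 0 <= D) by (eapply Rle_trans; [apply Rabs_pos | exact H1]).
  pose proof (Rabs_triang (interp zeta h s - zeta (cell_index h s))
                (zeta (cell_index h s) - zeta (cell_index h t))).
  pose proof (Rabs_triang (interp zeta h s - zeta (cell_index h t))
                (zeta (cell_index h t) - interp zeta h t)).
  rewrite Rabs_minus_sym with (x := zeta (cell_index h t)) in *.
  replace (interp zeta h s - zeta (cell_index h s)
           + (zeta (cell_index h s) - zeta (cell_index h t)))
    with (interp zeta h s - zeta (cell_index h t)) in * by ring.
  replace (interp zeta h s - zeta (cell_index h t) + (zeta (cell_index h t) - interp zeta h t))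
    with (interp zeta h s - interp zeta h t) in * by ring.
  rewrite HE. nra.
Qed.

Lemma interp_cont : cont_on (fun s => IZR lo * h <= s <= IZR hi * h) (interp zeta h).
Proof.
  intros t ht eps he.
  assert (hD : 0 <= D).
  { assert (IZR lo <= IZR hi) by nra. apply le_IZR in H.
    eapply Rle_trans; [apply Rabs_pos | apply (Hincr lo); lia]. }
  pose proof (Rmin_l h (eps * h / (D + 1))). pose proof (Rmin_r h (eps * h / (D + 1))).
  set (del := Rmin h (eps * h / (D + 1))) in *.
  assert (hdel : 0 < del) by (apply Rmin_pos; [lra | apply Rdiv_lt_0_compat; nra]).
  assert (Hclose : forall u v, IZR lo * h <= u <= v -> v <= IZR hi * h -> v - u < del ->
            Rabs (interp zeta h v - interp zeta h u) < eps).
  { intros u v huv hv hvu.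
    pose proof (cell_index_range h u lo hi hh ltac:(lra) ltac:(lra)).
    pose proof (cell_index_range h v lo hi hh ltac:(lra) ltac:(lra)).
    eapply Rle_lt_trans; [apply interp_lipschitz_local; [lra | lra | apply Hincr; lia ..]|].
    assert ((v - u) / h < eps / (D + 1)).
    { unfold Rdiv. apply Rmult_lt_reg_r with h; auto.
      rewrite Rmult_assoc, Rinv_l, Rmult_1_r by lra. unfold del, Rdiv in *. lra. }
    assert (D * ((v - u) / h) <= D * (eps / (D + 1))) by (apply Rmult_le_compat_l; lra).
    assert (D * (eps / (D + 1)) < eps).
    { unfold Rdiv. apply Rmult_lt_reg_r with (D + 1); [lra|].
      rewrite Rmult_assoc, Rmult_assoc, Rinv_l, Rmult_1_r by lra. nra. }
    lra. }
  exists del. split; [exact hdel|]. intros s hs hst. apply Rabs_lt_between in hst.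
  destruct (Rle_dec t s).
  - apply Hclose; lra.
  - rewrite Rabs_minus_sym. apply Hclose; lra.
Qed.

End Interpolation.

(** * Estimates for solutions of the delay equation *)

Section SolutionEstimates.

Variables (a r y : R -> R) (q sg M Yb : R).
Hypotheses (hq : 0 < q) (hsg : 0 <= sg) (Hy : dde_sol a r q sg y)
  (hM : forall t, 0 <= t -> Rabs (a t) <= M)
  (hr_range : forall t, 0 <= t -> 0 <= r t <= q)
  (HYb : forall t, sg - q <= t -> Rabs (y t) <= Yb).

Lemma dde_sol_lipschitz (u v : R) : sg <= u <= v -> Rabs (y v - y u) <= M * Yb * (v - u).
Proof.
  intros huv. destruct Hy as [Hc Hd].
  apply (increment_le_of_derive_bounded y (fun t => - a t * y (t - r t))); [lra | |].
  - intros c hc. split; [apply Hd; lra|].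
    rewrite Rabs_mult, Rabs_Ropp. apply Rmult_le_compat; try apply Rabs_pos.
    + apply hM; lra.
    + apply HYb. pose proof (hr_range c ltac:(lra)). lra.
  - intros c hc. apply (cont_on_continuity_pt (sg - q)); [exact Hc | lra].
Qed.

Lemma dde_sol_modulus (D h : R) : 0 < h -> 0 <= D ->
  (forall u v, sg - q <= u <= sg -> sg - q <= v <= sg ->
     Rabs (y u - y v) <= D * (Rabs (u - v) / h + 3)) ->
  forall u v, sg - q <= u -> sg - q <= v ->
    Rabs (y u - y v) <= D * (Rabs (u - v) / h + 3) + M * Yb * Rabs (u - v).
Proof.
  intros hh hD Hini.
  assert (hMYb : 0 <= M * Yb).
  { pose proof (hM 0 (Rle_refl 0)); pose proof (Rabs_pos (a 0)).
    pose proof (HYb sg ltac:(lra)); pose proof (Rabs_pos (y sg)). nra. }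
  assert (Hdiv : forall x z, 0 <= x <= z -> x / h <= z / h).
  { intros x z hxz. unfold Rdiv. apply Rmult_le_compat_r; [left; apply Rinv_0_lt_compat|]; lra. }
  assert (Hordered : forall u v, sg - q <= u <= v ->
     Rabs (y u - y v) <= D * ((v - u) / h + 3) + M * Yb * (v - u)).
  { intros u v huv.
    assert (0 <= (v - u) / h) by (apply Rmult_le_pos; [|left; apply Rinv_0_lt_compat]; lra).
    rewrite Rabs_minus_sym.
    destruct (Rle_dec v sg) as [hv|hv]; [|destruct (Rle_dec sg u) as [hu|hu]].
    - pose proof (Hini v u ltac:(lra) ltac:(lra)).
      rewrite (Rabs_right (v - u)) in * by lra. nra.
    - pose proof (dde_sol_lipschitz u v ltac:(lra)). nra.
    - pose proof (Hini sg u ltac:(lra) ltac:(lra)). pose proof (dde_sol_lipschitz sg v ltac:(lra)).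
      rewrite (Rabs_right (sg - u)) in * by lra.
      assert ((sg - u) / h <= (v - u) / h) by (apply Hdiv; lra).
      pose proof (Rabs_triang (y v - y sg) (y sg - y u)).
      replace (y v - y sg + (y sg - y u)) with (y v - y u) in * by ring.
      nra. }
  intros u v hu hv. destruct (Rle_dec u v).
  - rewrite (Rabs_minus_sym u v), (Rabs_right (v - u)) by lra. apply Hordered; lra.
  - rewrite (Rabs_minus_sym (y u)), (Rabs_right (u - v)) by lra. apply Hordered; lra.
Qed.

End SolutionEstimates.

Lemma dde_sol_scale (a r y : R -> R) (q sg c : R) :
  dde_sol a r q sg y -> dde_sol a r q sg (fun t => c * y t).
Proof.
  intros [Hc Hd]. split.
  - intros t ht eps he.
    destruct (Hc t ht (eps / (Rabs c + 1))) as [d [hd Hd']];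
      [apply Rdiv_lt_0_compat; [exact he | pose proof (Rabs_pos c); lra]|].
    exists d; split; auto. intros s hs hst.
    rewrite <- Rmult_minus_distr_l, Rabs_mult.
    specialize (Hd' s hs hst). pose proof (Rabs_pos c).
    assert (Rabs c * (eps / (Rabs c + 1)) < eps).
    { unfold Rdiv. apply Rmult_lt_reg_r with (Rabs c + 1); [lra|].
      rewrite Rmult_assoc, Rmult_assoc, Rinv_l, Rmult_1_r by lra. nra. }
    pose proof (Rabs_pos (y s - y t)). nra.
  - intros t ht. replace (- a t * (c * y (t - r t))) with (c * (- a t * y (t - r t))) by ring.
    apply (derivable_pt_lim_scal y c t _ (Hd t ht)).
Qed.

(* The equation is linear, so [y] can be rescaled into the range of the hypothesis. *)
Lemma dde_bound_rescale (a r : R -> R) (q del E : R) (S : R -> R -> Prop) :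
  0 < del ->
  (forall sg x, 0 <= sg -> dde_sol a r q sg x ->
     (forall s, sg - q <= s <= sg -> Rabs (x s) < del) -> forall t, S sg t -> Rabs (x t) < E) ->
  forall sg y P, 0 <= sg -> dde_sol a r q sg y -> 0 < P ->
    (forall s, sg - q <= s <= sg -> Rabs (y s) <= P) ->
    forall t, S sg t -> Rabs (y t) <= E * (2 * P / del).
Proof.
  intros hdel HS sg y P hsg Hy hP Hw t ht.
  set (c := del / (2 * P)). assert (hc : 0 < c) by (apply Rdiv_lt_0_compat; lra).
  assert (Hc := HS sg (fun t => c * y t) hsg (dde_sol_scale a r y q sg c Hy)).
  assert (Hw' : forall s, sg - q <= s <= sg -> Rabs (c * y s) < del).
  { intros s hs. rewrite Rabs_mult, Rabs_right by lra. specialize (Hw s hs).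
    assert (c * P = del / 2) by (unfold c; field; lra). nra. }
  specialize (Hc Hw' t ht). simpl in Hc. rewrite Rabs_mult, Rabs_right in Hc by lra.
  replace (E * (2 * P / del)) with (E / c) by (unfold c; field; lra).
  assert (c * (E / c) = E) by (field; lra). nra.
Qed.

Lemma dde_UAS_linear (a r : R -> R) (q : R) : dde_UAS a r q ->
  exists C, 1 <= C /\
  (forall sg y P, 0 <= sg -> dde_sol a r q sg y -> 0 < P ->
     (forall s, sg - q <= s <= sg -> Rabs (y s) <= P) ->
     forall t, sg - q <= t -> Rabs (y t) <= C * P) /\
  (forall rho, 0 < rho -> exists T, 0 <= T /\
     forall sg y P, 0 <= sg -> dde_sol a r q sg y -> 0 < P ->
     (forall s, sg - q <= s <= sg -> Rabs (y s) <= P) ->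
     forall t, sg + T <= t -> Rabs (y t) <= rho * P).
Proof.
  intros [Hstab [del0 [hdel0 Hattr]]].
  destruct (Hstab 1 Rlt_0_1) as [del1 [hdel1 Hstab1]].
  assert (hdiv1 : 0 <= 2 / del1) by (apply Rmult_le_pos; [lra | left; apply Rinv_0_lt_compat; lra]).
  exists (1 + 2 / del1). split; [lra | split].
  - intros sg y P hsg Hy hP Hw t ht. destruct (Rle_dec t sg) as [hts|hts].
    + pose proof (Hw t ltac:(lra)). assert (0 <= 2 / del1 * P) by (apply Rmult_le_pos; lra). lra.
    + pose proof (dde_bound_rescale a r q del1 1 (fun sg t => sg <= t) hdel1 Hstab1
                    sg y P hsg Hy hP Hw t ltac:(lra)).
      replace (1 * (2 * P / del1)) with (2 / del1 * P) in * by (field; lra). lra.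
  - intros rho hrho. destruct (Hattr (rho * del0 / 2)) as [T [hT HT]];
      [apply Rdiv_lt_0_compat; [apply Rmult_lt_0_compat|]; lra|].
    exists T. split; [exact hT|]. intros sg y P hsg Hy hP Hw t ht.
    replace (rho * P) with (rho * del0 / 2 * (2 * P / del0)) by (field; lra).
    exact (dde_bound_rescale a r q del0 _ (fun sg t => sg + T <= t) hdel0 HT
             sg y P hsg Hy hP Hw t ht).
Qed.

(** * Uniform asymptotic stability of the scheme *)

Lemma pow_step_le_exp (M h : R) (j : nat) : 0 <= M -> 0 < h ->
  (1 + M * h) ^ j <= exp (M * (INR j * h)).
Proof.
  intros. eapply Rle_trans; [apply pow_1plus_le_exp; nra|].
  right. f_equal. ring.
Qed.

Lemma exists_grid_cover (T h : R) : 0 <= T -> 0 < h ->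
  exists L : nat, T <= INR L * h <= T + h.
Proof.
  intros hT hh. destruct (archimed (T / h)) as [ar1 ar2].
  assert (hTh : 0 <= T / h) by (apply Rmult_le_pos; [lra | left; apply Rinv_0_lt_compat; lra]).
  assert (hup : (0 <= up (T / h))%Z) by (apply le_IZR; lra).
  exists (Z.to_nat (up (T / h))). rewrite INR_IZR_INZ, Z2Nat.id by exact hup.
  assert (T / h * h = T) by (field; lra). split; nra.
Qed.

Section Shadowing.

Variables (a r : R -> R) (q M h : R) (k : nat).
Hypotheses (hq : 0 < q) (hh : 0 < h) (hqk : q = INR k * h)
  (ha_cont : cont_on (fun t => 0 <= t) a) (hr_cont : cont_on (fun t => 0 <= t) r)
  (hM : forall t, 0 <= t -> Rabs (a t) <= M)
  (hr_range : forall t, 0 <= t -> 0 <= r t <= q).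

Lemma window_growth (n0 : Z) (zeta : Z -> R) (B : R) :
  h <= q -> (0 <= n0)%Z -> 0 <= B -> diff_sol a r h n0 zeta ->
  (forall m, (n0 - Z.of_nat k <= m <= n0)%Z -> Rabs (zeta m) <= B) ->
  (forall m, (n0 - Z.of_nat k <= m <= n0 + Z.of_nat k + 1)%Z ->
     Rabs (zeta m) <= exp (2 * M * q) * B) /\
  (forall l, (n0 <= l <= n0 + Z.of_nat k)%Z ->
     Rabs (zeta (l + 1)%Z - zeta l) <= M * h * (exp (2 * M * q) * B)).
Proof.
  intros hhq hn0 hB Hz Hw. pose proof (bound_nonneg a M hM) as hM0.
  assert (Hgrow : forall m, (n0 - Z.of_nat k <= m <= n0 + Z.of_nat k + 1)%Z ->
            Rabs (zeta m) <= exp (2 * M * q) * B).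
  { intros m hm.
    eapply Rle_trans; [apply (diff_sol_growth a r q M h k hh hqk ha_cont hM hr_range
                                zeta n0 B hn0 hB Hz Hw (k + 1)); lia|].
    rewrite Rmult_comm. apply Rmult_le_compat_r; [exact hB|].
    eapply Rle_trans; [apply pow_step_le_exp; assumption|].
    apply exp_le_exp. rewrite plus_INR. simpl INR. nra. }
  split; [exact Hgrow|].
  intros l hl. rewrite Hz by lia.
  destruct (kn_bounds_int r q h k hh hqk hr_range l ltac:(lia)) as [[hk1 hk2] _].
  replace (zeta l - coef a h l * zeta (l - kn r h l)%Z - zeta l)
    with (- (coef a h l * zeta (l - kn r h l)%Z)) by ring.
  rewrite Rabs_Ropp, Rabs_mult. apply Rmult_le_compat; try apply Rabs_pos.
  - apply (coef_bound_int a M h hh ha_cont hM). lia.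
  - apply Hgrow. lia.
Qed.

Lemma window_solution (n0 : Z) (zeta : Z -> R) (Bw D : R) :
  (0 <= n0)%Z ->
  (forall m, (n0 <= m <= n0 + Z.of_nat k + 1)%Z -> Rabs (zeta m) <= Bw) ->
  (forall l, (n0 <= l <= n0 + Z.of_nat k)%Z -> Rabs (zeta (l + 1)%Z - zeta l) <= D) ->
  let sg := IZR (n0 + Z.of_nat k) * h in
  exists y, dde_sol a r q sg y /\
    (forall m, (n0 <= m <= n0 + Z.of_nat k)%Z -> y (IZR m * h) = zeta m) /\
    (forall s, sg - q <= s <= sg -> Rabs (y s) <= Bw) /\
    (forall u v, sg - q <= u <= sg -> sg - q <= v <= sg ->
       Rabs (y u - y v) <= D * (Rabs (u - v) / h + 3)).
Proof.
  intros hn0 Hbound Hincr sg.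
  assert (hsgq : sg - q = IZR n0 * h)
    by (unfold sg; rewrite plus_IZR, <- INR_IZR_INZ; lra).
  assert (hsg0 : 0 <= sg - q) by (rewrite hsgq; apply Rmult_le_pos; [apply IZR_le|]; lia + lra).
  assert (Hcell : forall s, sg - q <= s <= sg ->
            (n0 <= cell_index h s <= n0 + Z.of_nat k)%Z).
  { intros s hs. apply cell_index_range; [exact hh | lra | unfold sg in hs; lra]. }
  destruct (dde_sol_exists a r (interp zeta h) q sg M Bw hq ltac:(lra) ha_cont hM hr_range hr_cont)
    as [y [Hy Hyinit]].
  - rewrite hsgq. apply (interp_cont zeta h hh D). exact Hincr.
  - intros s hs. pose proof (Hcell s hs). apply interp_bound; apply Hbound; lia.
  - exists y. split; [exact Hy|]. split; [|split].
    + intros m hm. rewrite Hyinit; [apply interp_grid, hh|].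
      pose proof (grid_window h k (n0 + Z.of_nat k) m hh ltac:(lia)). unfold sg. lra.
    + intros s hs. rewrite Hyinit by exact hs.
      pose proof (Hcell s hs). apply interp_bound; apply Hbound; lia.
    + intros u v hu hv. rewrite !Hyinit by assumption.
      apply (interp_modulus zeta h hh D n0 (n0 + Z.of_nat k)); [exact Hincr | apply Hcell ..];
        assumption.
Qed.

Lemma shadow_error (n0 : Z) (zeta : Z -> R) (y : R -> R) (D Yb e : R) (J : nat) :
  (0 <= n0)%Z -> 0 <= D -> 0 < e ->
  let sg := IZR (n0 + Z.of_nat k) * h in
  diff_sol a r h n0 zeta -> dde_sol a r q sg y ->
  (forall m, (n0 <= m <= n0 + Z.of_nat k)%Z -> y (IZR m * h) = zeta m) ->
  (forall u v, sg - q <= u <= sg -> sg - q <= v <= sg ->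
     Rabs (y u - y v) <= D * (Rabs (u - v) / h + 3)) ->
  (forall t, sg - q <= t -> Rabs (y t) <= Yb) ->
  (forall s t, 0 <= s -> 0 <= t -> Rabs (s - t) < h -> Rabs (r s - r t) < e) ->
  forall m, (n0 <= m <= n0 + Z.of_nat k + Z.of_nat J)%Z ->
    Rabs (y (IZR m * h) - zeta m)
    <= (D * ((h + e) / h + 3) + M * Yb * (h + e)) * ((1 + M * h) ^ J - 1).
Proof.
  intros hn0 hD he sg Hz Hy Hyz Hini HYb Hr m hm.
  pose proof (bound_nonneg a M hM) as hM0.
  assert (hsg : 0 <= sg).
  { unfold sg. apply Rmult_le_pos; [apply IZR_le; lia | lra]. }
  assert (hYb : 0 <= Yb) by (pose proof (HYb sg ltac:(lra)); pose proof (Rabs_pos (y sg)); lra).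
  assert (hdiv : 0 <= (h + e) / h) by (apply Rmult_le_pos; [|left; apply Rinv_0_lt_compat]; lra).
  assert (Hmod := dde_sol_modulus a r y q sg M Yb hq hsg Hy hM hr_range HYb D h hh hD Hini).
  apply (grid_error_of_modulus a r q M h k hq hh hqk ha_cont hM hr_range y zeta
           (n0 + Z.of_nat k) J e); [lia | | exact Hy | intros n hn; apply Hz; lia
           | intros; apply Hyz; lia | exact Hr | | lia].
  - assert (0 <= M * Yb) by (apply Rmult_le_pos; lra).
    apply Rplus_le_le_0_compat; apply Rmult_le_pos; lra.
  - intros u v hu hv huv. fold sg in hu, hv.
    eapply Rle_trans; [apply Hmod; lra|].
    assert (Rabs (u - v) / h <= (h + e) / h).
    { unfold Rdiv. apply Rmult_le_compat_r; [left; apply Rinv_0_lt_compat|]; lra. }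
    pose proof (Rabs_pos (u - v)).
    assert (0 <= M * Yb) by (apply Rmult_le_pos; lra).
    nra.
Qed.

End Shadowing.

Lemma shadow_budget (M G B C Lam h e X : R) :
  0 <= M -> 1 <= G -> 0 < B -> 0 <= C -> 1 <= Lam -> 0 < h < e ->
  e = 1 / (8 * (M * G * (4 + C) + 1) * Lam) -> 0 <= X <= Lam ->
  (M * h * (G * B) * ((h + e) / h + 3) + M * (C * (G * B)) * (h + e)) * X <= B / 4.
Proof.
  intros hM hG hB hC hLam he He hX.
  set (C1 := M * G * (4 + C) + 1) in He.
  assert (hMG : 0 <= M * G * (4 + C)) by (apply Rmult_le_pos; nra).
  replace (M * h * (G * B) * ((h + e) / h + 3) + M * (C * (G * B)) * (h + e))
    with (B * (M * G * (4 * h + e) + M * G * C * (h + e))) by (field; lra).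
  assert (Hsmall : M * G * (4 * h + e) + M * G * C * (h + e) <= C1 * (2 * e)).
  { assert (0 <= M * G) by nra. assert (0 <= M * G * C) by nra. unfold C1. nra. }
  replace (B / 4) with (B * (C1 * (2 * e)) * Lam) by (rewrite He; unfold C1; field; nra).
  assert (0 <= M * G * (4 * h + e) + M * G * C * (h + e))
    by (assert (0 <= M * G) by nra; assert (0 <= M * G * C) by nra; nra).
  apply Rmult_le_compat; [apply Rmult_le_pos; lra | lra | apply Rmult_le_compat_l; lra | lra].
Qed.

Definition block_halving (a r : R -> R) (h : R) (k : nat) (Cb : R) (Pk : nat) : Prop :=
  forall n0 zeta B, (0 <= n0)%Z -> diff_sol a r h n0 zeta -> 0 < B ->
    (forall m, (n0 - Z.of_nat k <= m <= n0)%Z -> Rabs (zeta m) <= B) ->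
    (forall m, (n0 - Z.of_nat k <= m <= n0 + Z.of_nat Pk)%Z -> Rabs (zeta m) <= Cb * B) /\
    (forall m, (n0 + Z.of_nat Pk - Z.of_nat k <= m <= n0 + Z.of_nat Pk)%Z ->
       Rabs (zeta m) <= B / 2).

Section Stability.

Variables (q : R) (a r : R -> R) (M : R).
Hypotheses (hq : 0 < q) (ha_cont : cont_on (fun t => 0 <= t) a)
  (hr_cont : cont_on (fun t => 0 <= t) r)
  (hr_range : forall t, 0 <= t -> 0 <= r t <= q)
  (hM : forall t, 0 <= t -> Rabs (a t) <= M).

(* [C] and [T] are the constants of the linear form of (A1), [exp (2 M q)]
   bounds the growth over [k + 1] steps and [exp (M (T + 2 q))] the Gronwall
   factor over [T + 2 q]; [er] is the oscillation of [r] over one step that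
   the comparison can afford. *)
Variables (C T : R).
Hypotheses (hC : 1 <= C) (hT : 0 <= T)
  (Hbound : forall sg y P, 0 <= sg -> dde_sol a r q sg y -> 0 < P ->
     (forall s, sg - q <= s <= sg -> Rabs (y s) <= P) ->
     forall t, sg - q <= t -> Rabs (y t) <= C * P)
  (Hdecay : forall sg y P, 0 <= sg -> dde_sol a r q sg y -> 0 < P ->
     (forall s, sg - q <= s <= sg -> Rabs (y s) <= P) ->
     forall t, sg + T <= t -> Rabs (y t) <= / (4 * exp (2 * M * q)) * P).

Lemma block_halving_fine_grid (k : nat) (er : R) :
  (1 <= k)%nat -> q / INR k < q -> q / INR k < er ->
  er = 1 / (8 * (M * exp (2 * M * q) * (4 + C) + 1) * exp (M * (T + 2 * q))) ->
  (forall s t, 0 <= s -> 0 <= t -> Rabs (s - t) < q / INR k -> Rabs (r s - r t) < er) ->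
  exists Pk : nat, (1 <= Pk)%nat /\ block_halving a r (q / INR k) k (C * exp (2 * M * q) + 1) Pk.
Proof.
  intros hk1 hhq hher Her Hr.
  pose proof (bound_nonneg a M hM) as hM0.
  destruct (step_pos q k hq hk1) as [hh hqk].
  set (h := q / INR k) in *. set (G := exp (2 * M * q)) in *.
  assert (hG : 1 <= G) by (unfold G; rewrite <- exp_0; apply exp_le_exp; nra).
  destruct (exists_grid_cover T h hT hh) as [L [hL1 hL2]].
  exists (2 * k + L)%nat. split; [lia|].
  intros n0 zeta B hn0 Hz hB Hw.
  destruct (window_growth a r q M h k hh hqk ha_cont hM hr_range n0 zeta B ltac:(lra)
              hn0 ltac:(lra) Hz Hw) as [Hgrow Hincr].
  fold G in Hgrow, Hincr.
  destruct (window_solution a r q M h k hq hh hqk ha_cont hr_cont hM hr_range n0 zeta (G * B)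
              (M * h * (G * B)) hn0 ltac:(intros; apply Hgrow; lia) Hincr)
    as [y [Hy [Hyz [Hyinit Hini]]]].
  set (sg := IZR (n0 + Z.of_nat k) * h) in *.
  assert (hsg : 0 <= sg) by (unfold sg; apply Rmult_le_pos; [apply IZR_le; lia | lra]).
  assert (hGB : 0 < G * B) by nra.
  pose proof (Hbound sg y (G * B) hsg Hy hGB Hyinit) as HYb.
  pose proof (Hdecay sg y (G * B) hsg Hy hGB Hyinit) as Hlate.
  replace (/ (4 * G) * (G * B)) with (B / 4) in Hlate by (field; lra).
  assert (Hclose : forall m, (n0 <= m <= n0 + Z.of_nat (2 * k + L))%Z ->
            Rabs (y (IZR m * h) - zeta m) <= B / 4).
  { intros m hm.
    eapply Rle_trans; [apply (shadow_error a r q M h k hq hh hqk ha_cont hM hr_range n0 zeta y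
      (M * h * (G * B)) (C * (G * B)) er (L + k) hn0
      ltac:(apply Rmult_le_pos; [apply Rmult_le_pos|]; lra) ltac:(lra) Hz Hy Hyz Hini HYb Hr);
      lia|].
    apply (shadow_budget M G B C (exp (M * (T + 2 * q))) h er);
      [lra | lra | lra | lra | rewrite <- exp_0; apply exp_le_exp; nra | lra | exact Her |].
    assert (0 <= M * h) by (apply Rmult_le_pos; lra).
    pose proof (pow_R1_Rle (1 + M * h) (L + k) ltac:(lra)).
    pose proof (pow_step_le_exp M h (L + k) hM0 hh).
    assert (exp (M * (INR (L + k) * h)) <= exp (M * (T + 2 * q)))
      by (apply exp_le_exp; rewrite plus_INR; nra).
    lra. }
  split.
  - intros m hm. destruct (Z.le_gt_cases m (n0 + Z.of_nat k + 1)) as [c|c];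
      [eapply Rle_trans; [apply Hgrow; lia | nra]|].
    assert (hm_sg : sg - q <= IZR m * h)
      by (unfold sg; apply Rle_trans with (IZR m * h - q);
          [apply Rplus_le_compat_r, Rmult_le_compat_r; [lra | apply IZR_le; lia] | lra]).
    pose proof (HYb _ hm_sg). pose proof (Hclose m ltac:(lia)).
    pose proof (Rabs_triang_inv (zeta m) (y (IZR m * h))).
    rewrite (Rabs_minus_sym (zeta m)) in *. nra.
  - intros m hm.
    assert (hm_T : sg + T <= IZR m * h).
    { assert (IZR (n0 + Z.of_nat k) + INR L <= IZR m)
        by (rewrite INR_IZR_INZ, <- plus_IZR; apply IZR_le; lia).
      unfold sg. nra. }
    pose proof (Hlate _ hm_T). pose proof (Hclose m ltac:(lia)).
    pose proof (Rabs_triang_inv (zeta m) (y (IZR m * h))).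
    rewrite (Rabs_minus_sym (zeta m)) in *. lra.
Qed.

End Stability.

Lemma eventually_block_halving (q : R) (a r : R -> R) (M : R)
  (hq : 0 < q) (ha_cont : cont_on (fun t => 0 <= t) a)
  (hr_range : forall t, 0 <= t -> 0 <= r t <= q)
  (hM : forall t, 0 <= t -> Rabs (a t) <= M)
  (A1 : dde_UAS a r q)
  (hr_unif : forall eps, 0 < eps -> exists del, 0 < del /\
     forall s t, 0 <= s -> 0 <= t -> Rabs (s - t) < del -> Rabs (r s - r t) < eps) :
  exists Cb, 0 < Cb /\ exists K0 : nat, forall k, (K0 <= k)%nat -> (1 <= k)%nat ->
    exists Pk : nat, (1 <= Pk)%nat /\ block_halving a r (q / INR k) k Cb Pk.
Proof.
  pose proof (bound_nonneg a M hM) as hM0.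
  assert (hr_cont : cont_on (fun t => 0 <= t) r).
  { intros t ht eps he. destruct (hr_unif eps he) as [d [hd Hd]]. exists d; split; auto. }
  set (G := exp (2 * M * q)).
  assert (hG : 1 <= G) by (unfold G; rewrite <- exp_0; apply exp_le_exp; nra).
  destruct (dde_UAS_linear a r q A1) as [C [hC [Hbound Hattr]]].
  destruct (Hattr (/ (4 * G))) as [T [hT Hdecay]]; [apply Rinv_0_lt_compat; lra|].
  set (er := 1 / (8 * (M * G * (4 + C) + 1) * exp (M * (T + 2 * q)))).
  assert (her : 0 < er).
  { unfold er. assert (0 <= M * G * (4 + C)) by (apply Rmult_le_pos; nra).
    pose proof (exp_pos (M * (T + 2 * q))). apply Rdiv_lt_0_compat; nra. }
  destruct (hr_unif er her) as [dr [hdr Hdr]].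
  destruct (exists_small_step q (Rmin q (Rmin er dr))) as [K0 HK0];
    [exact hq | apply Rmin_pos; [lra | apply Rmin_pos; lra]|].
  exists (C * G + 1). split; [nra|].
  exists K0. intros k hk hk1. specialize (HK0 k hk hk1).
  pose proof (Rmin_l q (Rmin er dr)); pose proof (Rmin_r q (Rmin er dr));
    pose proof (Rmin_l er dr); pose proof (Rmin_r er dr).
  apply (block_halving_fine_grid q a r M hq ha_cont hr_cont hr_range hM C T hC hT
           Hbound Hdecay k er hk1); [lra | lra | reflexivity |].
  intros s t hs ht hst. apply Hdr; [exact hs | exact ht | lra].
Qed.

Section BlockIteration.

Variables (a r : R -> R) (h Cb : R) (k Pk : nat).
Hypotheses (hPk : (1 <= Pk)%nat) (Hblock : block_halving a r h k Cb Pk).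

Lemma block_halving_iter (j : nat) :
  forall n0 zeta B, (0 <= n0)%Z -> diff_sol a r h n0 zeta -> 0 < B ->
  (forall m, (n0 - Z.of_nat k <= m <= n0)%Z -> Rabs (zeta m) <= B) ->
  forall m, (n0 + Z.of_nat j * Z.of_nat Pk <= m <= n0 + (Z.of_nat j + 1) * Z.of_nat Pk)%Z ->
    Rabs (zeta m) <= Cb * B / 2 ^ j.
Proof.
  induction j as [|j IH]; intros n0 zeta B hn0 Hz hB Hw m hm.
  - simpl. rewrite Rdiv_1_r. apply (proj1 (Hblock n0 zeta B hn0 Hz hB Hw)). lia.
  - destruct (Hblock n0 zeta B hn0 Hz hB Hw) as [_ Hhalf].
    replace (Cb * B / 2 ^ S j) with (Cb * (B / 2) / 2 ^ j)
      by (simpl; field; apply pow_nonzero; lra).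
    apply (IH (n0 + Z.of_nat Pk)%Z); [lia | intros n hn; apply Hz; lia | lra | |].
    + intros m' hm'. apply Hhalf. lia.
    + rewrite Nat2Z.inj_succ in hm. lia.
Qed.

Lemma block_halving_decay : forall n0 zeta B, (0 <= n0)%Z -> diff_sol a r h n0 zeta -> 0 < B ->
  (forall m, (n0 - Z.of_nat k <= m <= n0)%Z -> Rabs (zeta m) <= B) ->
  forall n, (n0 <= n)%Z -> Rabs (zeta n) <= Cb * B / 2 ^ Z.to_nat ((n - n0) / Z.of_nat Pk).
Proof.
  intros n0 zeta B hn0 Hz hB Hw n hn.
  apply (block_halving_iter _ n0 zeta B hn0 Hz hB Hw).
  assert (hP : (0 < Z.of_nat Pk)%Z) by lia.
  assert (hquot : (0 <= (n - n0) / Z.of_nat Pk)%Z) by (apply Z.div_pos; lia).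
  rewrite Z2Nat.id by exact hquot.
  pose proof (Z.div_mod (n - n0) (Z.of_nat Pk) ltac:(lia)).
  pose proof (Z.mod_pos_bound (n - n0) (Z.of_nat Pk) hP).
  nia.
Qed.

End BlockIteration.

Lemma diff_UAS_of_block_halving (a r : R -> R) (q Cb : R) (k Pk : nat) :
  0 < Cb -> (1 <= Pk)%nat -> block_halving a r (q / INR k) k Cb Pk -> diff_UAS a r q k.
Proof.
  intros hCb hPk Hblock.
  pose proof (block_halving_decay a r (q / INR k) Cb k Pk hPk Hblock) as Hdecay.
  unfold diff_UAS. cbv zeta. split.
  - intros eps he. exists (eps / (2 * Cb)). split; [apply Rdiv_lt_0_compat; lra|].
    intros n0 zeta hn0 Hz Hw n hn.
    assert (hB : 0 < eps / (2 * Cb)) by (apply Rdiv_lt_0_compat; lra).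
    eapply Rle_lt_trans;
      [apply (Hdecay n0 zeta _ hn0 Hz hB (fun m hm => Rlt_le _ _ (Hw m hm)) n hn)|].
    set (j := Z.to_nat _).
    assert (1 <= 2 ^ j) by (apply pow_R1_Rle; lra).
    replace (Cb * (eps / (2 * Cb)) / 2 ^ j) with (eps / 2 / 2 ^ j) by (field; lra).
    apply Rle_lt_trans with (eps / 2); [|lra].
    unfold Rdiv at 1. rewrite <- (Rmult_1_r (eps / 2)) at 2.
    apply Rmult_le_compat_l; [lra|]. rewrite <- Rinv_1. apply Rinv_le_contravar; lra.
  - exists 1. split; [lra|]. intros eta he.
    destruct (INR_unbounded (Cb / eta)) as [J hJ].
    exists (Z.of_nat (J * Pk)). split; [lia|].
    intros n0 zeta hn0 Hz Hw n hn.
    eapply Rle_lt_trans;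
      [apply (Hdecay n0 zeta 1 hn0 Hz Rlt_0_1 (fun m hm => Rlt_le _ _ (Hw m hm)) n); lia|].
    set (j := Z.to_nat _).
    assert (hjJ : (J <= j)%nat).
    { unfold j. rewrite Nat2Z.inj_mul in hn.
      assert (Z.of_nat J <= (n - n0) / Z.of_nat Pk)%Z by (apply Z.div_le_lower_bound; lia).
      lia. }
    assert (2 ^ J <= 2 ^ j) by (apply Rle_pow; lra || lia).
    pose proof (INR_lt_pow2 J).
    assert (0 < 2 ^ J) by (apply pow_lt; lra).
    assert (Cb / 2 ^ J < eta).
    { apply Rmult_lt_reg_r with (2 ^ J); auto. unfold Rdiv.
      rewrite Rmult_assoc, Rinv_l, Rmult_1_r by lra.
      assert (Cb / eta * eta = Cb) by (field; lra). nra. }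
    assert (Cb * 1 / 2 ^ j <= Cb / 2 ^ J).
    { rewrite Rmult_1_r. unfold Rdiv. apply Rmult_le_compat_l; [lra|].
      apply Rinv_le_contravar; lra. }
    lra.
Qed.

Theorem corollary4p2 (q : R) (a r : R -> R)
  (hq : 0 < q)
  (ha_cont : cont_on (fun t => 0 <= t) a)
  (ha_nonneg : forall t, 0 <= t -> 0 <= a t)
  (hr_range : forall t, 0 <= t -> 0 <= r t <= q)
  (hr_sup : is_lub (fun y => exists t, 0 <= t /\ y = r t) q)
  (A1 : dde_UAS a r q)
  (A2 : exists M, forall t, 0 <= t -> Rabs (a t) <= M)
  (A3 : forall eps, 0 < eps -> exists del, 0 < del /\
          forall s t, 0 <= s -> 0 <= t -> Rabs (s - t) < del ->
            Rabs (r s - r t) < eps) :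
  (forall (phi : R -> R), cont_on (fun s => -q <= s <= 0) phi ->
   forall t, 0 < t ->
   forall x, dde_sol a r q 0 x -> (forall s, -q <= s <= 0 -> x s = phi s) ->
   forall eps, 0 < eps -> exists K : nat, forall k : nat, (K <= k)%nat -> (1 <= k)%nat ->
     forall zeta, diff_sol a r (q / INR k) 0 zeta ->
       (forall m, (- Z.of_nat k <= m <= 0)%Z -> zeta m = phi (IZR m * (q / INR k))) ->
       Rabs (x t - zeta (Int_part (t / (q / INR k)))) < eps)
  /\
  (exists K : nat, forall k : nat, (K <= k)%nat -> (1 <= k)%nat -> diff_UAS a r q k).
Proof.
  destruct A2 as [M hM]. split.
  - intros phi _. exact (scheme_converges q a r M hq ha_cont hr_range hM A3 phi).
  - destruct (eventually_block_halving q a r M hq ha_cont hr_range hM A1 A3)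
      as [Cb [hCb [K HK]]].
    exists K. intros k hk hk1. destruct (HK k hk hk1) as [Pk [hPk Hblock]].
    exact (diff_UAS_of_block_halving a r q Cb k Pk hCb hPk Hblock).
Qed.
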